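(* Let $\mathbb{H}$ be a real Hilbert space, $T\in\mathbb{B}(\mathbb{H})$ with $T\neq 0$, and fix $\epsilon\in[0,1)$. (i) The following are equivalent: (1) for every $A\in\mathbb{B}(\mathbb{H})$: $T\perp_B^{\epsilon}A$ if and only if there exists $x\in M_T$ with $|\langle Tx,Ax\rangle|\le\epsilon\|T\|\|A\|$; (2) $M_T=S_{H_0}$ for some finite dimensional subspace $H_0$ of $\mathbb{H}$, and the restriction of $T$ to $H_0^{\perp}$ satisfies $\|T|_{H_0^\perp}\|<\|T\|$. (ii) If (2) holds, then for every $A\in\mathbb{B}(\mathbb{H})$ with $M_T\subseteq M_A$: $T\perp_B^{\epsilon}A$ if and only if there exists $x\in M_T$ with $Tx\perp^{\epsilon}Ax$.
   Context: $\mathbb{B}(\mathbb{H})$ is the space of bounded linear operators on $\mathbb{H}$ with the operator norm. $S_{H_0}$ is the unit sphere of $H_0$; $M_T=\{x\in S_{\mathbb{H}}:\|Tx\|=\|T\|\}$. For $\epsilon\in[0,1)$ and $u,v$ in a normed space, $u\perp_B^{\epsilon}v$ means $\|u+\lambda v\|^2\ge\|u\|^2-2\epsilon\|u\|\|\lambda v\|$ for all $\lambda\in\mathbb{R}$ (applied here to operators with the operator norm). In an inner product space, $x\perp^{\epsilon}y$ means $|\langle x,y\rangle|\le\epsilon\|x\|\|y\|$. *)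

From Stdlib Require Import Reals Lra ClassicalEpsilon.
Open Scope R_scope.
Set Implicit Arguments.

Record HilbertSpace : Type := {
  hcar :> Type;
  hzero : hcar;
  hadd : hcar -> hcar -> hcar;
  hopp : hcar -> hcar;
  hscal : R -> hcar -> hcar;
  hinner : hcar -> hcar -> R;
  hadd_assoc : forall x y z, hadd x (hadd y z) = hadd (hadd x y) z;
  hadd_comm : forall x y, hadd x y = hadd y x;
  hadd_0 : forall x, hadd hzero x = x;
  hadd_opp : forall x, hadd x (hopp x) = hzero;
  hscal_1 : forall x, hscal 1 x = x;
  hscal_assoc : forall a b x, hscal a (hscal b x) = hscal (a * b) x;
  hscal_addr : forall a x y, hscal a (hadd x y) = hadd (hscal a x) (hscal a y);
  hscal_addl : forall a b x, hscal (a + b) x = hadd (hscal a x) (hscal b x);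
  hinner_sym : forall x y, hinner x y = hinner y x;
  hinner_addl : forall x y z, hinner (hadd x y) z = hinner x z + hinner y z;
  hinner_scall : forall a x y, hinner (hscal a x) y = a * hinner x y;
  hinner_pos : forall x, 0 <= hinner x x;
  hinner_def : forall x, hinner x x = 0 -> x = hzero;
  hcomplete : forall u : nat -> hcar,
    (forall eps, 0 < eps -> exists N, forall n m, (N <= n)%nat -> (N <= m)%nat ->
        sqrt (hinner (hadd (u n) (hopp (u m))) (hadd (u n) (hopp (u m)))) < eps) ->
    exists l, forall eps, 0 < eps -> exists N, forall n, (N <= n)%nat ->
        sqrt (hinner (hadd (u n) (hopp l)) (hadd (u n) (hopp l))) < eps
}.

Section Defs.
Variable H : HilbertSpace.

Definition hnorm (x : H) : R := sqrt (hinner H x x).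

Definition linear_op (T : H -> H) : Prop :=
  (forall x y, T (hadd H x y) = hadd H (T x) (T y)) /\
  (forall a x, T (hscal H a x) = hscal H a (T x)).

Definition bounded_linear (T : H -> H) : Prop :=
  linear_op T /\ exists C, forall x, hnorm (T x) <= C * hnorm x.

Definition opnorm_on (Q : H -> Prop) (T : H -> H) : R :=
  epsilon (inhabits 0)
    (is_lub (fun r => exists x, Q x /\ hnorm x <= 1 /\ r = hnorm (T x))).

Definition opnorm (T : H -> H) : R := opnorm_on (fun _ => True) T.

Definition normset (T : H -> H) (x : H) : Prop :=
  hnorm x = 1 /\ hnorm (T x) = opnorm T.

Definition BJ_orth_eps (eps : R) (T A : H -> H) : Prop :=
  forall lam : R,
    (opnorm (fun x => hadd H (T x) (hscal H lam (A x)))) ^ 2 >=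
    (opnorm T) ^ 2 - 2 * eps * opnorm T * opnorm (fun x => hscal H lam (A x)).

Definition ip_orth_eps (eps : R) (x y : H) : Prop :=
  Rabs (hinner H x y) <= eps * hnorm x * hnorm y.

Definition is_subspace (P : H -> Prop) : Prop :=
  P (hzero H) /\ (forall x y, P x -> P y -> P (hadd H x y)) /\
  (forall a x, P x -> P (hscal H a x)).

Fixpoint lin_comb (n : nat) (v : nat -> H) (c : nat -> R) : H :=
  match n with
  | O => hzero H
  | S k => hadd H (lin_comb k v c) (hscal H (c k) (v k))
  end.

Definition finite_dim_subspace (P : H -> Prop) : Prop :=
  is_subspace P /\
  exists (n : nat) (v : nat -> H),
    (forall i, (i < n)%nat -> P (v i)) /\
    (forall x, P x -> exists c, x = lin_comb n v c).

Definition orth_compl (P : H -> Prop) (y : H) : Prop :=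
  forall x, P x -> hinner H x y = 0.

Definition unit_sphere (P : H -> Prop) (x : H) : Prop :=
  P x /\ hnorm x = 1.

End Defs.

Arguments hnorm {H} x.
Arguments linear_op {H} T.
Arguments bounded_linear {H} T.
Arguments opnorm_on {H} Q T.
Arguments opnorm {H} T.
Arguments normset {H} T x.
Arguments BJ_orth_eps {H} eps T A.
Arguments ip_orth_eps {H} eps x y.
Arguments is_subspace {H} P.
Arguments lin_comb {H} n v c.
Arguments finite_dim_subspace {H} P.
Arguments orth_compl {H} P y.
Arguments unit_sphere {H} P x.

From Stdlib Require Import Reals Lra Psatz ClassicalEpsilon Classical FunctionalExtensionality.
Open Scope R_scope.

(** On [M_T = S_H0] every [x] satisfies [T^* T x = ||T||^2 x]. Suppose [T] is Birkhoff-James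
    [eps]-orthogonal to [A] while [|<T x, A x>| > eps ||T|| ||A||] on [M_T]. The quadratic form
    [<T x, A x>] then has constant sign on [H0], say positive, and since [H0] is finite
    dimensional it exceeds [eps ||T|| ||A|| ||x||^2] uniformly; together with the gap
    [||T|_(H0^perp)|| < ||T||] this gives [||T - mu A||^2 < ||T||^2 - 2 eps mu ||T|| ||A||] for
    small [mu > 0], a contradiction. Conversely, under (1) the subspace [H0] must be the
    eigenspace of [T^* T] for [||T||^2]. If it were infinite dimensional, a diagonal contraction
    [D] along an orthonormal sequence in it, with weights increasing to [1 - eps], makes
    [T (I - D)] [eps]-orthogonal to [T] with no witness in [M_T]; if there were no gap, [T]
    composed with the projection onto [H0] would be orthogonal to [T] although it agrees with
    [T] on [M_T]. Part (ii) is (i) read with [||T x|| = ||T||] and [||A x|| = ||A||]. *)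

Section HilbertOperators.
Variable H : HilbertSpace.
Local Notation "x '+v' y" := (hadd H x y) (at level 50, left associativity).
Local Notation "a '*v' x" := (hscal H a x) (at level 40, no associativity).
Local Notation "'0v'" := (hzero H).
Local Notation ip := (hinner H).
Implicit Types (e : nat -> H) (c d : nat -> R) (n m : nat).

Definition hsub (x y : H) : H := x +v (-1) *v y.

Lemma hadd_0r (x : H) : x +v 0v = x.
Proof. rewrite hadd_comm; apply hadd_0. Qed.

Lemma hadd_cancel (x y z : H) : x +v y = x +v z -> y = z.
Proof.
  intro E. rewrite <- (hadd_0 H y), <- (hadd_0 H z).
  rewrite <- (hadd_opp H x), (hadd_comm H x (hopp H x)).
  rewrite <- !hadd_assoc, E. reflexivity.
Qed.

Lemma hscal_0l (x : H) : 0 *v x = 0v.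
Proof.
  apply (hadd_cancel (0 *v x)). rewrite <- hscal_addl, hadd_0r.
  replace (0 + 0) with 0 by ring. reflexivity.
Qed.

Lemma hscal_0r (a : R) : a *v 0v = 0v.
Proof.
  rewrite <- (hscal_0l 0v) at 1. rewrite hscal_assoc, Rmult_0_r. apply hscal_0l.
Qed.

Lemma hopp_scal (x : H) : hopp H x = (-1) *v x.
Proof.
  apply (hadd_cancel x). rewrite hadd_opp.
  rewrite <- (hscal_1 H x) at 1. rewrite <- hscal_addl.
  replace (1 + -1) with 0 by ring. symmetry; apply hscal_0l.
Qed.

Lemma hadd_swap4 (a b c d : H) : (a +v b) +v (c +v d) = (a +v c) +v (b +v d).
Proof.
  rewrite !hadd_assoc. f_equal. rewrite <- !hadd_assoc. f_equal. apply hadd_comm.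
Qed.

Lemma hsub_self (x : H) : hsub x x = 0v.
Proof. unfold hsub. rewrite <- hopp_scal. apply hadd_opp. Qed.

Lemma hadd_hsub (a b : H) : a +v hsub b a = b.
Proof.
  unfold hsub. rewrite hadd_assoc, (hadd_comm _ a b), <- hadd_assoc.
  fold (hsub a a). rewrite hsub_self. apply hadd_0r.
Qed.

Lemma hsub_eq0 (a b : H) : hsub a b = 0v -> a = b.
Proof. intro E. rewrite <- (hadd_hsub b a), E. apply hadd_0r. Qed.

Lemma hsub_trans (a b c : H) : hsub a c = hsub a b +v hsub b c.
Proof.
  unfold hsub. rewrite hadd_assoc. f_equal. rewrite <- hadd_assoc.
  rewrite (hadd_comm _ ((-1) *v b) b). fold (hsub b b). rewrite hsub_self, hadd_0r.
  reflexivity.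
Qed.

Lemma hsub_swap (a b : H) : hsub b a = (-1) *v hsub a b.
Proof.
  unfold hsub. rewrite hscal_addr, hscal_assoc. replace (-1 * -1) with 1 by ring.
  rewrite hscal_1, hadd_comm. reflexivity.
Qed.

Lemma hsub_add (a b c d : H) : hsub (a +v b) (c +v d) = hsub a c +v hsub b d.
Proof. unfold hsub. rewrite hscal_addr. apply hadd_swap4. Qed.

Lemma hsub_add_scal (u v w : H) (a : R) : hsub (u +v a *v v) w = hsub u w +v a *v v.
Proof. unfold hsub. rewrite <- !hadd_assoc. f_equal. apply hadd_comm. Qed.

Lemma hsub_scal (a : R) (x y : H) : hsub (a *v x) (a *v y) = a *v hsub x y.
Proof. unfold hsub. rewrite hscal_addr, !hscal_assoc. f_equal. f_equal. ring. Qed.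

Lemma ip_0l (y : H) : ip 0v y = 0.
Proof. rewrite <- (hscal_0l 0v), hinner_scall. ring. Qed.

Lemma ip_0r (y : H) : ip y 0v = 0.
Proof. rewrite hinner_sym. apply ip_0l. Qed.

Lemma ip_addr (x y z : H) : ip x (y +v z) = ip x y + ip x z.
Proof. rewrite hinner_sym, hinner_addl, (hinner_sym _ y), (hinner_sym _ z). reflexivity. Qed.

Lemma ip_scalr (a : R) (x y : H) : ip x (a *v y) = a * ip x y.
Proof. rewrite hinner_sym, hinner_scall, hinner_sym. reflexivity. Qed.

Lemma ip_subl (x y z : H) : ip (hsub x y) z = ip x z - ip y z.
Proof. unfold hsub. rewrite hinner_addl, hinner_scall. ring. Qed.

Lemma ip_subr (x y z : H) : ip z (hsub x y) = ip z x - ip z y.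
Proof. unfold hsub. rewrite ip_addr, ip_scalr. ring. Qed.

Lemma ip_expand (x z : H) (a : R) :
  ip (x +v a *v z) (x +v a *v z) = ip x x + 2 * a * ip x z + a * a * ip z z.
Proof. rewrite hinner_addl, !ip_addr, !hinner_scall, !ip_scalr, (hinner_sym _ z x). ring. Qed.

Lemma ip_add_orth (x z : H) : ip x z = 0 -> ip (x +v z) (x +v z) = ip x x + ip z z.
Proof. intro E. rewrite hinner_addl, !ip_addr, (hinner_sym _ z x), E. ring. Qed.

Lemma hnorm_sq (x : H) : hnorm x * hnorm x = ip x x.
Proof. unfold hnorm. apply sqrt_sqrt, hinner_pos. Qed.

Lemma hnorm_ge0 (x : H) : 0 <= hnorm x.
Proof. unfold hnorm. apply sqrt_pos. Qed.

Lemma hnorm_0 : hnorm 0v = 0.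
Proof. unfold hnorm. rewrite ip_0l. apply sqrt_0. Qed.

Lemma hnorm_eq0 (x : H) : hnorm x = 0 -> x = 0v.
Proof. intro E. apply hinner_def. rewrite <- hnorm_sq, E. ring. Qed.

Lemma hnorm_of_ip1 (x : H) : ip x x = 1 -> hnorm x = 1.
Proof. intro E. unfold hnorm. rewrite E. apply sqrt_1. Qed.

Lemma hnorm_scal (a : R) (x : H) : hnorm (a *v x) = Rabs a * hnorm x.
Proof.
  unfold hnorm. rewrite hinner_scall, ip_scalr.
  replace (a * (a * ip x x)) with (Rsqr a * ip x x) by (unfold Rsqr; ring).
  rewrite sqrt_mult_alt by apply Rle_0_sqr. rewrite sqrt_Rsqr_abs. reflexivity.
Qed.

Lemma hnorm_le_of_ip (x : H) (b : R) : 0 <= b -> ip x x <= b * b -> hnorm x <= b.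
Proof.
  intros Hb Hx. unfold hnorm. rewrite <- (sqrt_square b Hb). apply sqrt_le_1_alt. exact Hx.
Qed.

Lemma ip_le_of_hnorm (x : H) (b : R) : hnorm x <= b -> ip x x <= b * b.
Proof. intro Hx. rewrite <- hnorm_sq. pose proof (hnorm_ge0 x). nra. Qed.

Lemma cauchy_schwarz_sq (x y : H) : ip x y * ip x y <= ip x x * ip y y.
Proof.
  destruct (Req_dec (ip y y) 0) as [E|E].
  - apply hinner_def in E. subst y. rewrite !ip_0r. lra.
  - pose proof (hinner_pos H y) as Hy.
    pose proof (hinner_pos H (x +v (- ip x y / ip y y) *v y)) as P.
    rewrite ip_expand in P.
    assert (Hq : 0 <= (ip x x * ip y y - ip x y * ip x y) / ip y y).
    { replace ((ip x x * ip y y - ip x y * ip x y) / ip y y) with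
        (ip x x + 2 * (- ip x y / ip y y) * ip x y
         + (- ip x y / ip y y) * (- ip x y / ip y y) * ip y y) by (field; lra).
      exact P. }
    apply Rmult_le_compat_r with (r := ip y y) in Hq; [|lra].
    replace ((ip x x * ip y y - ip x y * ip x y) / ip y y * ip y y) with
      (ip x x * ip y y - ip x y * ip x y) in Hq by (field; lra). lra.
Qed.

Lemma cauchy_schwarz (x y : H) : Rabs (ip x y) <= hnorm x * hnorm y.
Proof.
  apply Rsqr_incr_0_var.
  - rewrite <- Rsqr_abs. unfold Rsqr.
    replace (hnorm x * hnorm y * (hnorm x * hnorm y)) with
      ((hnorm x * hnorm x) * (hnorm y * hnorm y)) by ring.
    rewrite !hnorm_sq. apply cauchy_schwarz_sq.
  - pose proof (hnorm_ge0 x); pose proof (hnorm_ge0 y); nra.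
Qed.

Lemma hnorm_triangle (a b : H) : hnorm (a +v b) <= hnorm a + hnorm b.
Proof.
  apply hnorm_le_of_ip. { pose proof (hnorm_ge0 a); pose proof (hnorm_ge0 b); lra. }
  rewrite hinner_addl, !ip_addr, (hinner_sym _ b a).
  pose proof (cauchy_schwarz a b). pose proof (Rle_abs (ip a b)).
  rewrite <- !hnorm_sq. nra.
Qed.

Lemma hnorm_hsub_swap (a b : H) : hnorm (hsub b a) = hnorm (hsub a b).
Proof. rewrite hsub_swap, hnorm_scal, Rabs_left by lra. ring. Qed.

Lemma normalize (w : H) : w <> 0v ->
  ip ((/ hnorm w) *v w) ((/ hnorm w) *v w) = 1 /\ w = hnorm w *v ((/ hnorm w) *v w)
  /\ 0 < hnorm w.
Proof.
  intro Hw. assert (Hn : hnorm w <> 0) by (intro E; apply Hw, hnorm_eq0, E).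
  pose proof (hnorm_ge0 w).
  split; [|split; [|lra]].
  - rewrite hinner_scall, ip_scalr, <- hnorm_sq. field; auto.
  - rewrite hscal_assoc, Rinv_r, hscal_1; auto.
Qed.


Lemma lin_0 (S : H -> H) : linear_op S -> S 0v = 0v.
Proof. intros [_ Hs]. rewrite <- (hscal_0l 0v) at 1. rewrite Hs. apply hscal_0l. Qed.

Lemma lin_add (S : H -> H) x y : linear_op S -> S (x +v y) = S x +v S y.
Proof. intros [Ha _]. apply Ha. Qed.

Lemma lin_scal (S : H -> H) a x : linear_op S -> S (a *v x) = a *v S x.
Proof. intros [_ Hs]. apply Hs. Qed.

Definition bounded_on (Q : H -> Prop) (S : H -> H) : Prop :=
  exists C, forall x, Q x -> hnorm x <= 1 -> hnorm (S x) <= C.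

Lemma bounded_linear_bounded_on (Q : H -> Prop) (S : H -> H) :
  bounded_linear S -> bounded_on Q S.
Proof.
  intros [_ [C HC]]. exists (Rabs C). intros x _ Hx.
  eapply Rle_trans; [apply HC|]. pose proof (hnorm_ge0 x).
  pose proof (Rle_abs C). pose proof (Rabs_pos C). nra.
Qed.

Lemma opnorm_on_lub (Q : H -> Prop) (S : H -> H) : Q 0v -> bounded_on Q S ->
  is_lub (fun r => exists x, Q x /\ hnorm x <= 1 /\ r = hnorm (S x)) (opnorm_on Q S).
Proof.
  intros HQ [C HC]. unfold opnorm_on. apply epsilon_spec.
  destruct (completeness (fun r => exists x, Q x /\ hnorm x <= 1 /\ r = hnorm (S x)))
    as [m Hm]; [| |exists m; exact Hm].
  - exists C. intros r [x [Qx [Hx ->]]]. auto.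
  - exists (hnorm (S 0v)), 0v. rewrite hnorm_0. repeat split; auto; lra.
Qed.

Lemma opnorm_on_ge (Q : H -> Prop) (S : H -> H) x : Q 0v -> bounded_on Q S ->
  Q x -> hnorm x <= 1 -> hnorm (S x) <= opnorm_on Q S.
Proof. intros HQ HB Qx Hx. apply (opnorm_on_lub Q S HQ HB). exists x; auto. Qed.

Lemma opnorm_on_le (Q : H -> Prop) (S : H -> H) M : Q 0v -> bounded_on Q S ->
  (forall x, Q x -> hnorm x <= 1 -> hnorm (S x) <= M) -> opnorm_on Q S <= M.
Proof. intros HQ HB HM. apply (opnorm_on_lub Q S HQ HB). intros r [x [Qx [Hx ->]]]. auto. Qed.

Lemma opnorm_on_ge0 (Q : H -> Prop) (S : H -> H) : linear_op S -> Q 0v -> bounded_on Q S ->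
  0 <= opnorm_on Q S.
Proof.
  intros L HQ HB. rewrite <- hnorm_0, <- (lin_0 _ L). apply opnorm_on_ge; auto.
  rewrite hnorm_0; lra.
Qed.

Lemma opnorm_on_bound (Q : H -> Prop) (S : H -> H) x :
  linear_op S -> is_subspace Q -> bounded_on Q S ->
  Q x -> hnorm (S x) <= opnorm_on Q S * hnorm x.
Proof.
  intros L [Q0 [_ Qs]] HB Qx.
  destruct (classic (x = 0v)) as [->|Hx0].
  - rewrite (lin_0 _ L), hnorm_0. lra.
  - destruct (normalize _ Hx0) as [Hu [Hxu Hp]]. set (u := (/ hnorm x) *v x) in *.
    pose proof (opnorm_on_ge Q S _ Q0 HB (Qs _ _ Qx) (Req_le _ _ (hnorm_of_ip1 _ Hu))) as G.
    fold u in G. rewrite Hxu at 1. rewrite (lin_scal _ _ _ L), hnorm_scal, Rabs_right by lra.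
    pose proof (hnorm_ge0 (S u)). nra.
Qed.

Lemma orth_compl_subspace (P : H -> Prop) : is_subspace (orth_compl P).
Proof.
  split; [|split].
  - intros w _. apply ip_0r.
  - intros x y Hx Hy w Hw. rewrite ip_addr, Hx, Hy; auto. ring.
  - intros a y Hy w Hw. rewrite ip_scalr, Hy; auto. ring.
Qed.

Lemma opnorm_ge (S : H -> H) x : bounded_linear S -> hnorm x <= 1 -> hnorm (S x) <= opnorm S.
Proof. intros B Hx. apply opnorm_on_ge; auto. apply bounded_linear_bounded_on; auto. Qed.

Lemma opnorm_le (S : H -> H) M : bounded_linear S ->
  (forall x, hnorm x <= 1 -> hnorm (S x) <= M) -> opnorm S <= M.
Proof. intros B HM. apply opnorm_on_le; auto. apply bounded_linear_bounded_on; auto. Qed.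

Lemma opnorm_ge0 (S : H -> H) : bounded_linear S -> 0 <= opnorm S.
Proof. intros B. apply opnorm_on_ge0; [apply B | auto | apply bounded_linear_bounded_on; auto]. Qed.

Lemma opnorm_bound (S : H -> H) x : bounded_linear S -> hnorm (S x) <= opnorm S * hnorm x.
Proof.
  intros B. apply opnorm_on_bound; [apply B | | apply bounded_linear_bounded_on; auto | auto].
  repeat split; auto.
Qed.

Lemma opnorm_sq_le (S : H -> H) W : bounded_linear S ->
  (forall y, hnorm y <= 1 -> ip (S y) (S y) <= W) -> opnorm S * opnorm S <= W.
Proof.
  intros B HW.
  assert (HW0 : 0 <= W).
  { pose proof (HW 0v ltac:(rewrite hnorm_0; lra)). pose proof (hinner_pos H (S 0v)). lra. }
  assert (opnorm S <= sqrt W).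
  { apply opnorm_le; auto. intros y Hy. unfold hnorm. apply sqrt_le_1_alt. auto. }
  pose proof (opnorm_ge0 S B). pose proof (sqrt_sqrt W HW0). nra.
Qed.

Lemma ip_op_bound (T A : H -> H) u v : bounded_linear T -> bounded_linear A ->
  Rabs (ip (T u) (A v)) <= opnorm T * opnorm A * hnorm u * hnorm v.
Proof.
  intros BT BA. eapply Rle_trans; [apply cauchy_schwarz|].
  replace (opnorm T * opnorm A * hnorm u * hnorm v) with
    ((opnorm T * hnorm u) * (opnorm A * hnorm v)) by ring.
  apply Rmult_le_compat; try apply hnorm_ge0; apply opnorm_bound; auto.
Qed.

Lemma opnorm_gt0 (T : H -> H) : bounded_linear T -> (exists x, T x <> 0v) -> 0 < opnorm T.
Proof.
  intros BT [x Hx]. pose proof (opnorm_bound T x BT).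
  assert (0 < hnorm (T x)).
  { destruct (Rle_lt_or_eq_dec _ _ (hnorm_ge0 (T x))) as [|E]; auto.
    exfalso; apply Hx, hnorm_eq0; auto. }
  pose proof (hnorm_ge0 x). pose proof (opnorm_ge0 T BT). nra.
Qed.

Lemma bounded_linear_add_scal (S U : H -> H) (a : R) :
  bounded_linear S -> bounded_linear U -> bounded_linear (fun x => S x +v a *v U x).
Proof.
  intros [LS [C1 H1]] [LU [C2 H2]]. split.
  - split.
    + intros x y. rewrite (lin_add _ _ _ LS), (lin_add _ _ _ LU), hscal_addr. apply hadd_swap4.
    + intros b x. rewrite (lin_scal _ _ _ LS), (lin_scal _ _ _ LU), hscal_addr, !hscal_assoc.
      f_equal. f_equal. ring.
  - exists (Rabs C1 + Rabs a * Rabs C2). intro x.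
    eapply Rle_trans; [apply hnorm_triangle|]. rewrite hnorm_scal.
    pose proof (H1 x); pose proof (H2 x); pose proof (hnorm_ge0 x).
    pose proof (Rle_abs C1); pose proof (Rle_abs C2); pose proof (Rabs_pos a).
    assert (hnorm (U x) <= Rabs C2 * hnorm x) by nra. nra.
Qed.

Lemma bounded_linear_scal (S : H -> H) (a : R) :
  bounded_linear S -> bounded_linear (fun x => a *v S x).
Proof.
  intros [L [C HC]]. split.
  - split; intros.
    + rewrite (lin_add _ _ _ L), hscal_addr. reflexivity.
    + rewrite (lin_scal _ _ _ L), !hscal_assoc, Rmult_comm. reflexivity.
  - exists (Rabs a * C). intro x. rewrite hnorm_scal, Rmult_assoc.
    apply Rmult_le_compat_l; auto. apply Rabs_pos.
Qed.

Lemma opnorm_scal (S : H -> H) (lam : R) : bounded_linear S ->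
  opnorm (fun x => lam *v S x) = Rabs lam * opnorm S.
Proof.
  intros B. pose proof (bounded_linear_scal S lam B) as B'.
  apply Rle_antisym.
  - apply opnorm_le; auto. intros x Hx. rewrite hnorm_scal.
    apply Rmult_le_compat_l; [apply Rabs_pos | apply opnorm_ge; auto].
  - destruct (Req_dec lam 0) as [->|Hl].
    + rewrite Rabs_R0, Rmult_0_l. apply opnorm_ge0; auto.
    + assert (Hl' : 0 < Rabs lam) by (apply Rabs_pos_lt; auto).
      set (N := opnorm (fun x => lam *v S x)).
      enough (opnorm S <= N / Rabs lam) as K.
      { apply Rmult_le_compat_l with (r := Rabs lam) in K; [|lra].
        replace (Rabs lam * (N / Rabs lam)) with N in K by (field; lra). exact K. }
      apply opnorm_le; auto. intros x Hx.
      pose proof (opnorm_ge _ x B' Hx) as G. simpl in G. rewrite hnorm_scal in G. fold N in G.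
      apply Rmult_le_reg_l with (Rabs lam); auto.
      replace (Rabs lam * (N / Rabs lam)) with N by (field; lra). lra.
Qed.


Fixpoint ssum (n : nat) (f : nat -> R) : R :=
  match n with O => 0 | S k => ssum k f + f k end.

Lemma ssum_ext n f g : (forall i, (i < n)%nat -> f i = g i) -> ssum n f = ssum n g.
Proof.
  induction n; simpl; intros E; auto. rewrite IHn by (intros; apply E; lia). rewrite E by lia. auto.
Qed.

Lemma ssum_scal n a f : ssum n (fun i => a * f i) = a * ssum n f.
Proof. induction n; simpl; [ring | rewrite IHn; ring]. Qed.

Lemma ssum_minus n f g : ssum n (fun i => f i - g i) = ssum n f - ssum n g.
Proof. induction n; simpl; [ring | rewrite IHn; ring]. Qed.

Lemma ssum_le n f g : (forall i, (i < n)%nat -> f i <= g i) -> ssum n f <= ssum n g.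
Proof.
  induction n; simpl; intros E; [lra|]. pose proof (E n ltac:(lia)).
  assert (ssum n f <= ssum n g) by (apply IHn; intros; apply E; lia). lra.
Qed.

Lemma ssum_ge0 n f : (forall i, (i < n)%nat -> 0 <= f i) -> 0 <= ssum n f.
Proof.
  intro E. replace 0 with (ssum n (fun _ => 0)) by (clear E; induction n; simpl; lra).
  apply ssum_le; auto.
Qed.

Lemma ssum_term_le n f m : (m < n)%nat -> (forall i, (i < n)%nat -> 0 <= f i) ->
  f m <= ssum n f.
Proof.
  induction n; intros Hm E; [lia|]. simpl.
  destruct (Nat.eq_dec m n) as [->|Hne].
  - pose proof (ssum_ge0 n f ltac:(intros; apply E; lia)). lra.
  - pose proof (E n ltac:(lia)).
    assert (f m <= ssum n f) by (apply IHn; [lia | intros; apply E; lia]). lra.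
Qed.

Lemma ssum_diff_le f g m n : (m <= n)%nat -> (forall i, f i <= g i) ->
  ssum n f - ssum m f <= ssum n g - ssum m g.
Proof.
  intros Hmn Hfg. induction n as [|n IH].
  - assert (m = 0)%nat by lia. subst. simpl. lra.
  - destruct (Nat.eq_dec m (S n)) as [->|Hne]; [lra|].
    specialize (IH ltac:(lia)). simpl. pose proof (Hfg n). lra.
Qed.

Definition orthonormal (n : nat) (e : nat -> H) : Prop :=
  (forall i, (i < n)%nat -> ip (e i) (e i) = 1) /\
  (forall i j, (i < n)%nat -> (j < n)%nat -> i <> j -> ip (e i) (e j) = 0).

Lemma orthonormal_le n m e : (m <= n)%nat -> orthonormal n e -> orthonormal m e.
Proof. intros Hm [A B]. split; intros; [apply A | apply B]; auto; lia. Qed.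

Lemma orthonormal_ext n e e' : (forall i, (i < n)%nat -> e i = e' i) ->
  orthonormal n e -> orthonormal n e'.
Proof. intros E [O1 O2]. split; intros; rewrite <- !E by auto; auto. Qed.

Definition extend (e : nat -> H) (m : nat) (u : H) : nat -> H :=
  fun i => if Nat.eqb i m then u else e i.

Lemma extend_lt e m u i : (i < m)%nat -> extend e m u i = e i.
Proof. intro Hi. unfold extend. destruct (Nat.eqb_spec i m); auto; lia. Qed.

Lemma extend_eq e m u : extend e m u m = u.
Proof. unfold extend. rewrite Nat.eqb_refl. reflexivity. Qed.

Lemma orthonormal_extend m e (u : H) : orthonormal m e -> ip u u = 1 ->
  (forall i, (i < m)%nat -> ip (e i) u = 0) -> orthonormal (S m) (extend e m u).
Proof.
  intros [O1 O2] Hu Ho. unfold extend. split.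
  - intros i Hi. destruct (Nat.eqb_spec i m); auto. apply O1; lia.
  - intros i j Hi Hj Hij. destruct (Nat.eqb_spec i m), (Nat.eqb_spec j m).
    + lia.
    + rewrite hinner_sym; apply Ho; lia.
    + apply Ho; lia.
    + apply O2; lia.
Qed.

Lemma lin_comb_ext n e c d : (forall i, (i < n)%nat -> c i = d i) ->
  lin_comb n e c = lin_comb n e d.
Proof.
  induction n; simpl; intros E; auto. rewrite IHn by (intros; apply E; lia). rewrite E by lia. auto.
Qed.

Lemma lin_comb_ext_family n e e' c : (forall i, (i < n)%nat -> e i = e' i) ->
  lin_comb n e c = lin_comb n e' c.
Proof.
  induction n; simpl; intros E; auto. rewrite IHn by (intros; apply E; lia). rewrite E by lia. auto.
Qed.

Lemma lin_comb_add n e c d :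
  lin_comb n e (fun i => c i + d i) = lin_comb n e c +v lin_comb n e d.
Proof.
  induction n; simpl. { symmetry; apply hadd_0. }
  rewrite IHn, hscal_addl. apply hadd_swap4.
Qed.

Lemma lin_comb_scal n e c a : lin_comb n e (fun i => a * c i) = a *v lin_comb n e c.
Proof.
  induction n; simpl. { symmetry; apply hscal_0r. }
  rewrite IHn, hscal_addr, hscal_assoc. auto.
Qed.

Lemma lin_comb_zero n e c : (forall i, (i < n)%nat -> c i = 0) -> lin_comb n e c = 0v.
Proof.
  intro E. rewrite (lin_comb_ext n e c (fun i => 0 * c i)) by (intros; rewrite E; auto; ring).
  rewrite lin_comb_scal. apply hscal_0l.
Qed.

Lemma lin_comb_in (P : H -> Prop) n e c : is_subspace P ->
  (forall i, (i < n)%nat -> P (e i)) -> P (lin_comb n e c).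
Proof.
  intros [P0 [Pa Ps]]. induction n; simpl; intros E; auto.
  apply Pa; [apply IHn; intros; apply E; lia | apply Ps, E; lia].
Qed.

Lemma ip_lin_comb_l n e c y : ip (lin_comb n e c) y = ssum n (fun i => c i * ip (e i) y).
Proof. induction n; simpl. apply ip_0l. rewrite hinner_addl, hinner_scall, IHn. auto. Qed.

Lemma ip_lin_comb_r n e c y : ip y (lin_comb n e c) = ssum n (fun i => c i * ip y (e i)).
Proof. rewrite hinner_sym, ip_lin_comb_l. apply ssum_ext. intros; rewrite hinner_sym; auto. Qed.

Lemma ip_lin_comb_orth n e c y : (forall i, (i < n)%nat -> ip (e i) y = 0) ->
  ip (lin_comb n e c) y = 0.
Proof.
  intro E. rewrite ip_lin_comb_l.
  replace 0 with (ssum n (fun _ => 0)) by (clear E; induction n; simpl; lra).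
  apply ssum_ext; intros; rewrite E; auto; ring.
Qed.

Lemma ip_lin_comb_basis n m e c j : orthonormal m e -> (n <= m)%nat -> (j < n)%nat ->
  ip (lin_comb n e c) (e j) = c j.
Proof.
  intros [O1 O2] Hnm. induction n; intros Hj; [lia|]. simpl.
  rewrite hinner_addl, hinner_scall.
  destruct (Nat.eq_dec j n) as [->|Hne].
  - rewrite ip_lin_comb_orth, O1 by (try intros; try apply O2; lia). ring.
  - rewrite IHn, O2 by lia. ring.
Qed.

Lemma ip_lin_comb_lin_comb n e c d : orthonormal n e ->
  ip (lin_comb n e c) (lin_comb n e d) = ssum n (fun i => c i * d i).
Proof.
  intro O. rewrite ip_lin_comb_r. apply ssum_ext. intros i Hi.
  rewrite (ip_lin_comb_basis n n e c i O) by lia. ring.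
Qed.

Definition proj (n : nat) (e : nat -> H) (y : H) : H := lin_comb n e (fun i => ip y (e i)).

Lemma proj_add n e x y : proj n e (x +v y) = proj n e x +v proj n e y.
Proof. unfold proj. rewrite <- lin_comb_add. apply lin_comb_ext. intros; apply hinner_addl. Qed.

Lemma proj_scal n e a x : proj n e (a *v x) = a *v proj n e x.
Proof. unfold proj. rewrite <- lin_comb_scal. apply lin_comb_ext. intros; apply hinner_scall. Qed.

Lemma proj_lin_comb n e c : orthonormal n e -> proj n e (lin_comb n e c) = lin_comb n e c.
Proof. intro O. unfold proj. apply lin_comb_ext. intros i Hi. apply (ip_lin_comb_basis n n); auto. Qed.

Lemma proj_idem n e x : orthonormal n e -> proj n e (proj n e x) = proj n e x.
Proof. intro O. apply proj_lin_comb; auto. Qed.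

Lemma proj_of_orth n e y : (forall i, (i < n)%nat -> ip (e i) y = 0) -> proj n e y = 0v.
Proof. intro E. unfold proj. apply lin_comb_zero. intros; rewrite hinner_sym; auto. Qed.

Lemma proj_residual_orth n e y j : orthonormal n e -> (j < n)%nat ->
  ip (hsub y (proj n e y)) (e j) = 0.
Proof.
  intros O Hj. rewrite ip_subl. unfold proj. rewrite (ip_lin_comb_basis n n e _ j O) by lia. ring.
Qed.

Lemma proj_residual_orth_lin_comb n e y c : orthonormal n e ->
  ip (hsub y (proj n e y)) (lin_comb n e c) = 0.
Proof.
  intro O. rewrite hinner_sym. apply ip_lin_comb_orth. intros i Hi. rewrite hinner_sym.
  apply proj_residual_orth; auto.
Qed.

Lemma bessel n e y : orthonormal n e ->
  ssum n (fun i => ip y (e i) * ip y (e i)) <= ip y y.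
Proof.
  intro O. pose proof (hinner_pos H (hsub y (proj n e y))) as P.
  rewrite ip_subl, !ip_subr in P. unfold proj in P.
  rewrite ip_lin_comb_lin_comb, ip_lin_comb_l, ip_lin_comb_r in P by auto.
  rewrite (ssum_ext n (fun i => ip y (e i) * ip (e i) y) (fun i => ip y (e i) * ip y (e i))) in P
    by (intros; rewrite (hinner_sym _ (e i)); auto).
  lra.
Qed.

Lemma hnorm_proj_le n e x : orthonormal n e -> hnorm (proj n e x) <= hnorm x.
Proof.
  intro O. apply hnorm_le_of_ip; [apply hnorm_ge0|]. rewrite hnorm_sq. unfold proj at 1 2.
  rewrite ip_lin_comb_lin_comb by auto. apply bessel; auto.
Qed.

Lemma proj_extend m e u x :
  proj (S m) (extend e m u) x = proj m e x +v ip x u *v u.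
Proof.
  unfold proj. simpl. rewrite extend_eq.
  rewrite (lin_comb_ext m (extend e m u) _ (fun i => ip x (e i))) by
    (intros; rewrite extend_lt; auto).
  rewrite (lin_comb_ext_family m (extend e m u) e) by (intros; apply extend_lt; auto).
  reflexivity.
Qed.

Lemma orthonormal_residual (P : H -> Prop) m e y : is_subspace P -> orthonormal m e ->
  (forall i, (i < m)%nat -> P (e i)) -> P y -> proj m e y <> y ->
  exists u, P u /\ ip u u = 1 /\ (forall i, (i < m)%nat -> ip (e i) u = 0) /\
    y = proj m e y +v ip y u *v u.
Proof.
  intros HP O Pe Py Hy. pose proof HP as [_ [Pa Ps]].
  set (w := hsub y (proj m e y)).
  assert (Hw : w <> 0v) by (intro W; apply Hy; symmetry; apply hsub_eq0, W).
  destruct (normalize _ Hw) as [Hu [Hwu Hpos]]. set (u := (/ hnorm w) *v w) in *.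
  assert (Hou : forall i, (i < m)%nat -> ip (e i) u = 0).
  { intros i Hi. unfold u. rewrite ip_scalr, hinner_sym. unfold w.
    rewrite proj_residual_orth; auto. ring. }
  exists u. split; [|split; [|split]]; auto.
  - unfold u, w, hsub, proj. apply Ps, Pa; auto. apply Ps. apply lin_comb_in; auto.
  - assert (Hyu : ip y u = hnorm w).
    { assert (Hdec : y = proj m e y +v w) by (symmetry; apply hadd_hsub).
      rewrite Hdec at 1. rewrite hinner_addl. unfold proj at 1.
      rewrite ip_lin_comb_orth by auto. rewrite Hwu at 1. rewrite hinner_scall, Hu. ring. }
    rewrite Hyu, <- Hwu. symmetry. apply hadd_hsub.
Qed.

Lemma gram_schmidt_step (P : H -> Prop) m e y : is_subspace P -> orthonormal m e ->
  (forall i, (i < m)%nat -> P (e i)) -> P y ->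
  exists m' e', orthonormal m' e' /\ (forall i, (i < m')%nat -> P (e' i)) /\
    (forall x, proj m e x = x -> proj m' e' x = x) /\ proj m' e' y = y.
Proof.
  intros HP O Pe Py.
  destruct (classic (proj m e y = y)) as [Hy|Hy]; [exists m, e; auto|].
  destruct (orthonormal_residual P m e y HP O Pe Py Hy) as [u [Pu [Hu [Hou Hyu]]]].
  exists (S m), (extend e m u). split; [apply orthonormal_extend; auto|]. split; [|split].
  - intros i Hi. unfold extend. destruct (Nat.eqb_spec i m); auto. apply Pe; lia.
  - intros x Hx. rewrite proj_extend, Hx.
    replace (ip x u) with 0 by (rewrite <- Hx; symmetry; apply ip_lin_comb_orth; auto).
    rewrite hscal_0l. apply hadd_0r.
  - rewrite proj_extend. symmetry. exact Hyu.
Qed.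

Lemma proj_fixes_lin_comb m e k v c : (forall i, (i < k)%nat -> proj m e (v i) = v i) ->
  proj m e (lin_comb k v c) = lin_comb k v c.
Proof.
  induction k as [|k IH]; intro Hv; simpl.
  - apply proj_of_orth. intros; apply ip_0r.
  - rewrite proj_add, proj_scal, IH, Hv by (auto; intros; apply Hv; lia). reflexivity.
Qed.

Lemma gram_schmidt (P : H -> Prop) : finite_dim_subspace P ->
  exists m e, orthonormal m e /\ (forall i, (i < m)%nat -> P (e i)) /\
    (forall x, P x -> proj m e x = x).
Proof.
  intros [HP [n [v [Hv Hspan]]]].
  assert (Hk : forall k, (k <= n)%nat -> exists m e, orthonormal m e /\
    (forall i, (i < m)%nat -> P (e i)) /\ forall i, (i < k)%nat -> proj m e (v i) = v i).
  { induction k as [|k IH]; intros Hk.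
    - exists 0%nat, (fun _ => 0v). repeat split; intros; lia.
    - destruct (IH ltac:(lia)) as [m [e [O [Pe Fix]]]].
      destruct (gram_schmidt_step P m e (v k) HP O Pe (Hv k ltac:(lia))) as [m' [e' [O' [Pe' [Old New]]]]].
      exists m', e'. split; [|split]; auto. intros i Hi.
      destruct (Nat.eq_dec i k) as [->|]; auto. apply Old, Fix. lia. }
  destruct (Hk n (le_n n)) as [m [e [O [Pe Fix]]]].
  exists m, e. split; [|split]; auto. intros x Px. destruct (Hspan x Px) as [c ->].
  apply proj_fixes_lin_comb; auto.
Qed.


(** * Symmetric bounded forms *)

Lemma schur_coercive_real (d1 E C : R) : 0 < d1 -> 0 < E -> 0 <= C ->
  exists delta, 0 < delta /\ forall vv s beta rv, 0 <= vv -> d1 * vv <= rv ->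
    beta * beta <= C * C * vv -> delta * (vv + s * s) <= rv + E * (s + beta) * (s + beta).
Proof.
  intros Hd1 HE HC.
  set (theta := d1 / (2 * (E * C * C + d1))).
  assert (HECC : 0 <= E * C * C) by (apply Rmult_le_pos; [apply Rmult_le_pos|]; lra).
  assert (Ht0 : 0 < theta) by (unfold theta; apply Rdiv_lt_0_compat; lra).
  assert (Ht1 : theta * (2 * (E * C * C + d1)) = d1) by (unfold theta; field; lra).
  exists (Rmin (d1 / 2) (theta * E / 2)). split; [apply Rmin_glb_lt; nra|].
  intros vv s beta rv Hvv Hrv Hbeta.
  pose proof (Rmin_l (d1 / 2) (theta * E / 2)). pose proof (Rmin_r (d1 / 2) (theta * E / 2)).
  set (dl := Rmin (d1 / 2) (theta * E / 2)) in *.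
  assert (Hsq : s * s / 2 - beta * beta <= (s + beta) * (s + beta))
    by (pose proof (Rle_0_sqr (s + 2 * beta)); unfold Rsqr in *; lra).
  assert (theta <= 1/2) by nra.
  assert (Hsb : 0 <= (s + beta) * (s + beta)) by (pose proof (Rle_0_sqr (s + beta)); unfold Rsqr in *; lra).
  assert (theta * E * (s * s / 2 - beta * beta) <= theta * E * ((s + beta) * (s + beta)))
    by (apply Rmult_le_compat_l; nra).
  assert (theta * E * ((s + beta) * (s + beta)) <= E * (s + beta) * (s + beta)).
  { replace (E * (s + beta) * (s + beta)) with (1 * E * ((s + beta) * (s + beta))) by ring.
    apply Rmult_le_compat_r; [|apply Rmult_le_compat_r]; lra. }
  assert (theta * E * (beta * beta) <= theta * E * (C * C * vv))
    by (apply Rmult_le_compat_l; [apply Rmult_le_pos|]; lra).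
  assert (theta * E * (C * C * vv) <= d1 / 2 * vv).
  { replace (theta * E * (C * C * vv)) with ((theta * (E * C * C)) * vv) by ring.
    apply Rmult_le_compat_r; nra. }
  assert (dl * vv <= d1 / 2 * vv) by (apply Rmult_le_compat_r; lra).
  assert (dl * (s * s) <= theta * E / 2 * (s * s))
    by (apply Rmult_le_compat_r; [apply Rle_0_sqr | lra]).
  nra.
Qed.

Definition sym_form (B : H -> H -> R) (M : R) : Prop :=
  (forall x y z, B (x +v y) z = B x z + B y z) /\ (forall a x y, B (a *v x) y = a * B x y) /\
  (forall x y, B x y = B y x) /\ (forall x y, Rabs (B x y) <= M * hnorm x * hnorm y).

Lemma form_expand B M (x y : H) (a : R) : sym_form B M ->
  B (x +v a *v y) (x +v a *v y) = B x x + 2 * a * B x y + a * a * B y y.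
Proof.
  intros [Ba [Bs [Bsym _]]].
  rewrite Ba, Bs, (Bsym x (x +v a *v y)), (Bsym y (x +v a *v y)), !Ba, !Bs, (Bsym y x). ring.
Qed.

Lemma form_0 B M : sym_form B M -> B 0v 0v = 0.
Proof. intros [_ [Bs _]]. rewrite <- (hscal_0l 0v) at 1. rewrite Bs. ring. Qed.

Lemma form_scal2 B M a x : sym_form B M -> B (a *v x) (a *v x) = a * a * B x x.
Proof. intros [_ [Bs [Bsym _]]]. rewrite Bs, (Bsym x), Bs. ring. Qed.

Lemma sym_form_sub_ip B M k : sym_form B M -> 0 <= k ->
  sym_form (fun x y => B x y - k * ip x y) (M + k).
Proof.
  intros [Ba [Bsc [Bsym Bb]]] Hk. split; [|split; [|split]].
  - intros. rewrite Ba, hinner_addl. ring.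
  - intros. rewrite Bsc, hinner_scall. ring.
  - intros. rewrite Bsym, hinner_sym. ring.
  - intros x y. pose proof (Bb x y). pose proof (cauchy_schwarz x y).
    pose proof (hnorm_ge0 x). pose proof (hnorm_ge0 y).
    unfold Rminus. eapply Rle_trans; [apply Rabs_triang|].
    rewrite Rabs_Ropp, Rabs_mult, (Rabs_right k) by lra.
    assert (k * Rabs (ip x y) <= k * (hnorm x * hnorm y)) by (apply Rmult_le_compat_l; auto).
    nra.
Qed.

Lemma form_bound_ge0 B M (f : H) : sym_form B M -> hnorm f = 1 -> 0 <= M.
Proof.
  intros [_ [_ [_ Bb]]] Hf. pose proof (Bb f f) as K. rewrite Hf in K.
  pose proof (Rabs_pos (B f f)). lra.
Qed.

Lemma form_isotropic (B : H -> H -> R) M (P : H -> Prop) x1 x2 : sym_form B M -> is_subspace P ->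
  P x1 -> P x2 -> 0 < B x1 x1 -> B x2 x2 < 0 ->
  exists w, P w /\ ip w w = 1 /\ B w w = 0.
Proof.
  intros HB [P0 [Pa Ps]] H1 H2 Q1 Q2.
  set (b := B x1 x2). set (D := b * b - B x1 x1 * B x2 x2).
  assert (HD : 0 < D) by (unfold D; nra).
  set (s := (- b - sqrt D) / B x2 x2).
  set (w0 := x1 +v s *v x2).
  assert (Hw0 : B w0 w0 = 0).
  { unfold w0. rewrite (form_expand _ _ _ _ _ HB). fold b. unfold s.
    pose proof (sqrt_sqrt D (Rlt_le _ _ HD)) as Hsq.
    transitivity ((B x1 x1 * B x2 x2 - b * b + sqrt D * sqrt D) / B x2 x2); [field; lra|].
    rewrite Hsq. unfold D. field. lra. }
  assert (Hn0 : w0 <> 0v).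
  { intro W. assert (Hx1 : x1 = (- s) *v x2).
    { apply (hadd_cancel (s *v x2)). rewrite hadd_comm. fold w0. rewrite W, <- hscal_addl.
      replace (s + - s) with 0 by ring. symmetry; apply hscal_0l. }
    rewrite Hx1, (form_scal2 _ _ _ _ HB) in Q1. nra. }
  destruct (normalize _ Hn0) as [Hu _].
  exists ((/ hnorm w0) *v w0). split; [apply Ps; unfold w0; apply Pa; auto|]. split; auto.
  rewrite (form_scal2 _ _ _ _ HB), Hw0. ring.
Qed.

Definition schur (B : H -> H -> R) (f : H) : H -> H -> R :=
  fun u w => B u w - B u f * B w f / B f f.

Lemma schur_sym_form B M (f : H) : sym_form B M -> 0 < B f f -> hnorm f = 1 ->
  sym_form (schur B f) (M + M * M / B f f).
Proof.
  intros HB HE Hf. pose proof (form_bound_ge0 _ _ _ HB Hf) as HM.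
  pose proof HB as [Ba [Bs [Bsym Bb]]]. set (E := B f f) in *. unfold schur. fold E.
  split; [|split; [|split]].
  - intros; rewrite !Ba. field. lra.
  - intros; rewrite !Bs. field. lra.
  - intros; rewrite Bsym. field. lra.
  - intros x y. pose proof (Bb x y). pose proof (Bb x f). pose proof (Bb y f).
    rewrite Hf in *. pose proof (hnorm_ge0 x); pose proof (hnorm_ge0 y).
    eapply Rle_trans; [apply Rabs_triang|]. rewrite Rabs_Ropp.
    unfold Rdiv. rewrite !Rabs_mult, (Rabs_inv E), (Rabs_right E) by lra.
    assert (Rabs (B x f) * Rabs (B y f) <= M * hnorm x * (M * hnorm y)).
    { apply Rmult_le_compat; try apply Rabs_pos; nra. }
    assert (Rabs (B x f) * Rabs (B y f) * / E <= M * hnorm x * (M * hnorm y) * / E).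
    { apply Rmult_le_compat_r; auto. left; apply Rinv_0_lt_compat; lra. }
    replace ((M + M * M * / E) * hnorm x * hnorm y) with
      (M * hnorm x * hnorm y + M * hnorm x * (M * hnorm y) * / E) by (field; lra).
    lra.
Qed.

Lemma schur_decomp B M (f v : H) (s : R) : sym_form B M -> 0 < B f f ->
  B (v +v s *v f) (v +v s *v f) =
  schur B f v v + B f f * (s + B v f / B f f) * (s + B v f / B f f).
Proof.
  intros HB HE. rewrite (form_expand _ _ _ _ _ HB). unfold schur. field. lra.
Qed.

Lemma ip_span_last m e v : orthonormal (S m) e -> proj m e v = v -> ip v (e m) = 0.
Proof.
  intros O Hv. rewrite <- Hv. unfold proj. apply ip_lin_comb_orth.
  intros i Hi. apply (proj2 O); lia.
Qed.

Lemma proj_succ m e v s : orthonormal (S m) e -> proj m e v = v ->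
  proj (S m) e (v +v s *v e m) = v +v s *v e m.
Proof.
  intros O Hv. change (proj (S m) e (v +v s *v e m)) with
    (proj m e (v +v s *v e m) +v ip (v +v s *v e m) (e m) *v e m).
  rewrite proj_add, proj_scal, Hv, proj_of_orth, hscal_0r, hadd_0r
    by (intros; apply (proj2 O); lia).
  rewrite hinner_addl, hinner_scall, (ip_span_last m e v O Hv), (proj1 O) by lia.
  f_equal. f_equal. ring.
Qed.

Lemma form_ratio_sq_le B M (v f : H) (E : R) : sym_form B M -> hnorm f = 1 -> 0 < E ->
  B v f / E * (B v f / E) <= M / E * (M / E) * ip v v.
Proof.
  intros HB Hf HE. pose proof (proj2 (proj2 (proj2 HB)) v f) as Bb.
  rewrite Hf, Rmult_1_r in Bb. rewrite <- hnorm_sq.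
  pose proof (Rabs_pos (B v f)). pose proof (hnorm_ge0 v).
  assert (B v f * B v f <= M * hnorm v * (M * hnorm v)).
  { replace (B v f * B v f) with (Rabs (B v f) * Rabs (B v f))
      by (rewrite <- Rabs_mult; apply Rabs_pos_eq; nra).
    apply Rmult_le_compat; auto. }
  replace (B v f / E * (B v f / E)) with (B v f * B v f / (E * E)) by (field; lra).
  replace (M / E * (M / E) * (hnorm v * hnorm v)) with
    (M * hnorm v * (M * hnorm v) / (E * E)) by (field; lra).
  apply Rmult_le_compat_r; [left; apply Rinv_0_lt_compat; nra | auto].
Qed.

Lemma schur_pos m e B M : orthonormal (S m) e -> sym_form B M -> 0 < B (e m) (e m) ->
  (forall x, proj (S m) e x = x -> x <> 0v -> 0 < B x x) ->
  forall v, proj m e v = v -> v <> 0v -> 0 < schur B (e m) v v.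
Proof.
  intros O HB HE Hpos v Hv Hv0. pose proof (ip_span_last m e v O Hv) as Hvf.
  set (f := e m) in *. set (beta := B v f / B f f).
  assert (Hw0 : v +v (- beta) *v f <> 0v).
  { intro W. apply Hv0. apply hinner_def.
    assert (Hvb : v = beta *v f).
    { apply (hadd_cancel ((- beta) *v f)). rewrite hadd_comm, W, <- hscal_addl.
      replace (- beta + beta) with 0 by ring. symmetry; apply hscal_0l. }
    rewrite Hvb at 1. rewrite hinner_scall, hinner_sym, Hvf. ring. }
  pose proof (Hpos _ (proj_succ m e v (- beta) O Hv) Hw0) as P.
  rewrite (schur_decomp _ _ _ _ _ HB HE) in P. fold beta in P.
  replace (- beta + beta) with 0 in P by ring. lra.
Qed.

(** The induction on the dimension splits off one basis vector by a Schur complement. *)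
Lemma form_coercive m : forall e B M, orthonormal m e -> sym_form B M ->
  (forall x, proj m e x = x -> x <> 0v -> 0 < B x x) ->
  exists delta, 0 < delta /\ forall x, proj m e x = x -> delta * ip x x <= B x x.
Proof.
  induction m as [|m IH]; intros e B M O HB Hpos.
  - exists 1. split; [lra|]. intros x Hx. unfold proj in Hx. simpl in Hx. subst x.
    rewrite ip_0l, (form_0 _ _ HB). lra.
  - set (f := e m).
    assert (Hff : ip f f = 1) by (apply (proj1 O); lia).
    assert (Om : orthonormal m e) by (apply (orthonormal_le (S m)); auto).
    assert (Hnf : hnorm f = 1) by (apply hnorm_of_ip1; auto).
    set (E := B f f).
    assert (HE : 0 < E).
    { apply Hpos; [|intro F; rewrite F, ip_0l in Hff; lra].
      pose proof (proj_succ m e 0v 1 O ltac:(apply proj_of_orth; intros; apply ip_0r)) as K.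
      rewrite hadd_0, hscal_1 in K. exact K. }
    destruct (IH e (schur B f) _ Om (schur_sym_form _ _ _ HB HE Hnf)
                 (schur_pos m e B M O HB HE Hpos)) as [d1 [Hd1 Hd]].
    assert (HM : 0 <= M) by (apply (form_bound_ge0 _ _ f HB Hnf)).
    assert (HC : 0 <= M / E) by (apply Rmult_le_pos; [|left; apply Rinv_0_lt_compat]; lra).
    destruct (schur_coercive_real d1 E (M / E) Hd1 HE HC) as [delta [Hdelta Hcoer]].
    exists delta. split; auto. intros x Hx.
    set (v := proj m e x). set (s := ip x f).
    assert (Hxd : x = v +v s *v f) by (rewrite <- Hx at 1; reflexivity).
    assert (Sv : proj m e v = v) by (apply proj_idem; auto).
    assert (Hvf : ip v f = 0) by (apply ip_span_last; auto).
    assert (Hxx : ip x x = ip v v + s * s) by (rewrite Hxd, ip_expand, Hvf, Hff; ring).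
    rewrite Hxx, Hxd, (schur_decomp _ _ _ _ _ HB HE). fold E.
    apply Hcoer; auto; [apply hinner_pos | apply form_ratio_sq_le; auto].
Qed.


(** * Norm-attaining vectors *)

Lemma linear_coef_eq0 (al be : R) : (forall s, 2 * s * al + s * s * be <= 0) -> al = 0.
Proof.
  intro Hq. set (eta := / (1 + Rabs be)).
  pose proof (Rabs_pos be) as Hbe.
  assert (He : 0 < eta) by (unfold eta; apply Rinv_0_lt_compat; lra).
  assert (He1 : eta * Rabs be < 1).
  { assert (E1 : eta * (1 + Rabs be) = 1) by (unfold eta; field; lra). nra. }
  pose proof (Hq (eta * al)) as Q.
  assert (P : 0 < 2 * eta + eta * eta * be).
  { pose proof (Rle_abs (- be)) as K. rewrite Rabs_Ropp in K. nra. }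
  assert (al * al * (2 * eta + eta * eta * be) <= 0) by nra.
  destruct (Req_dec al 0); auto. assert (0 < al * al) by nra. nra.
Qed.

Lemma normset_ip (T : H -> H) x : normset T x ->
  ip x x = 1 /\ ip (T x) (T x) = opnorm T * opnorm T.
Proof. intros [N1 N2]. rewrite <- !hnorm_sq, N1, N2. split; ring. Qed.

(** [top_eigen T] is the eigenspace of [T^* T] for the eigenvalue [||T||^2], written without
    adjoints; it is the only possible [H0] in condition (2). *)
Definition top_eigen (T : H -> H) (x : H) : Prop :=
  forall z, ip (T x) (T z) = opnorm T * opnorm T * ip x z.

(** [s |-> ||T (x + s z)||^2 - ||T||^2 ||x + s z||^2] is maximal at [s = 0]. *)
Lemma normset_top_eigen (T : H -> H) x : bounded_linear T -> normset T x -> top_eigen T x.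
Proof.
  intros BT Nx z. pose proof BT as [L _].
  destruct (normset_ip T x Nx) as [I1 I2]. set (t := opnorm T) in *.
  enough (ip (T x) (T z) - t * t * ip x z = 0) by lra.
  apply (linear_coef_eq0 _ (ip (T z) (T z) - t * t * ip z z)). intro s.
  pose proof (ip_le_of_hnorm _ _ (opnorm_bound T (x +v s *v z) BT)) as Hs. fold t in Hs.
  replace (t * hnorm (x +v s *v z) * (t * hnorm (x +v s *v z))) with
    (t * t * (hnorm (x +v s *v z) * hnorm (x +v s *v z))) in Hs by ring.
  rewrite hnorm_sq, (lin_add _ _ _ L), (lin_scal _ _ _ L), !ip_expand, I1, I2 in Hs. nra.
Qed.

Lemma top_eigen_subspace (T : H -> H) : bounded_linear T -> is_subspace (top_eigen T).
Proof.
  intros [L _]. unfold top_eigen. split; [|split].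
  - intro z. rewrite (lin_0 _ L), !ip_0l. ring.
  - intros x y Hx Hy z. rewrite (lin_add _ _ _ L), !hinner_addl, Hx, Hy. ring.
  - intros a x Hx z. rewrite (lin_scal _ _ _ L), !hinner_scall, Hx. ring.
Qed.

Lemma normset_iff_top_eigen (T : H -> H) : bounded_linear T ->
  forall x, normset T x <-> unit_sphere (top_eigen T) x.
Proof.
  intros BT x. split.
  - intro Nx. split; [apply normset_top_eigen; auto | apply Nx].
  - intros [Hx Hn]. split; auto. pose proof (opnorm_ge0 T BT).
    unfold hnorm at 1. rewrite (Hx x), <- hnorm_sq, Hn, !Rmult_1_r. apply sqrt_square; auto.
Qed.

Lemma sphere_subspace_top_eigen (T : H -> H) (H0 : H -> Prop) x : bounded_linear T ->
  is_subspace H0 -> (forall x, normset T x <-> unit_sphere H0 x) -> H0 x -> top_eigen T x.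
Proof.
  intros BT HS Hsph Hx z. pose proof BT as [L _].
  destruct (classic (x = 0v)) as [->|Hx0].
  - rewrite (lin_0 _ L), !ip_0l. ring.
  - destruct (normalize _ Hx0) as [Hu [Hxu _]]. set (u := (/ hnorm x) *v x) in *.
    assert (Nu : normset T u).
    { apply Hsph. split; [apply HS; exact Hx | apply hnorm_of_ip1; auto]. }
    rewrite Hxu, (lin_scal _ _ _ L), !hinner_scall, (normset_top_eigen T u BT Nu). ring.
Qed.

(** * Condition (2) implies the characterization (1) *)

Lemma bj_orth_of_normset (T A : H -> H) (eps : R) x : bounded_linear T -> bounded_linear A ->
  normset T x -> Rabs (ip (T x) (A x)) <= eps * opnorm T * opnorm A -> BJ_orth_eps eps T A.
Proof.
  intros BT BA Nx Hq lam. rewrite (opnorm_scal A lam BA).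
  pose proof (bounded_linear_add_scal T A lam BT BA) as BL.
  pose proof (ip_le_of_hnorm _ _ (opnorm_ge _ x BL (Req_le _ _ (proj1 Nx)))) as G.
  simpl in G. rewrite ip_expand in G. destruct (normset_ip _ _ Nx) as [_ I2].
  rewrite I2 in G. pose proof (hinner_pos H (A x)).
  pose proof (Rle_abs (ip (T x) (A x))). pose proof (Rle_abs (- ip (T x) (A x))) as K.
  rewrite Rabs_Ropp in K.
  assert (2 * lam * ip (T x) (A x) >= - 2 * Rabs lam * (eps * opnorm T * opnorm A)).
  { destruct (Rle_or_lt 0 lam).
    - rewrite Rabs_right by lra. nra.
    - rewrite Rabs_left by lra. nra. }
  simpl. nra.
Qed.

Lemma bj_orth_opp (T A : H -> H) (eps : R) :
  BJ_orth_eps eps T A -> BJ_orth_eps eps T (fun x => (-1) *v A x).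
Proof.
  intros HBJ lam. specialize (HBJ (- lam)).
  replace (fun x => T x +v lam *v ((-1) *v A x)) with (fun x => T x +v (- lam) *v A x).
  replace (fun x => lam *v ((-1) *v A x)) with (fun x => (- lam) *v A x).
  - exact HBJ.
  - apply functional_extensionality. intro x. rewrite hscal_assoc. f_equal. ring.
  - apply functional_extensionality. intro x. rewrite hscal_assoc. do 2 f_equal. ring.
Qed.

Definition sym_part (T A : H -> H) : H -> H -> R :=
  fun x y => (ip (T x) (A y) + ip (T y) (A x)) / 2.

Lemma sym_part_diag (T A : H -> H) x : sym_part T A x x = ip (T x) (A x).
Proof. unfold sym_part. field. Qed.

Lemma sym_part_sym_form (T A : H -> H) : bounded_linear T -> bounded_linear A ->
  sym_form (sym_part T A) (opnorm T * opnorm A).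
Proof.
  intros BT BA. pose proof BT as [LT _]. pose proof BA as [LA _].
  unfold sym_part. split; [|split; [|split]].
  - intros. rewrite (lin_add _ _ _ LT), (lin_add _ _ _ LA), hinner_addl, ip_addr. field.
  - intros. rewrite (lin_scal _ _ _ LT), (lin_scal _ _ _ LA), hinner_scall, ip_scalr. field.
  - intros. field.
  - intros x y. pose proof (ip_op_bound T A x y BT BA). pose proof (ip_op_bound T A y x BT BA).
    unfold Rdiv. rewrite Rabs_mult, (Rabs_right (/ 2)) by lra.
    pose proof (Rabs_triang (ip (T x) (A y)) (ip (T y) (A x))). lra.
Qed.

(** Were [<T x, A x>] of both signs on [M_T], the quadratic form would vanish somewhere on the
    unit sphere of [H0], which is [M_T]. *)
Lemma normset_sign_constant (T A : H -> H) (H0 : H -> Prop) k :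
  bounded_linear T -> bounded_linear A -> is_subspace H0 ->
  (forall x, normset T x <-> unit_sphere H0 x) -> 0 <= k ->
  (forall x, normset T x -> k < Rabs (ip (T x) (A x))) ->
  (forall x, normset T x -> k < ip (T x) (A x)) \/
  (forall x, normset T x -> ip (T x) (A x) < - k).
Proof.
  intros BT BA HS Hsph Hk Hall.
  assert (Hsplit : forall x, normset T x -> k < ip (T x) (A x) \/ ip (T x) (A x) < - k).
  { intros x Nx. pose proof (Hall x Nx) as K.
    destruct (Rle_or_lt 0 (ip (T x) (A x))).
    - rewrite Rabs_right in K; lra.
    - rewrite Rabs_left in K; lra. }
  destruct (classic (exists x, normset T x /\ ip (T x) (A x) < - k)) as [[x2 [N2 Q2]]|Hno].
  - right. intros x1 N1. destruct (Hsplit x1 N1) as [Q1|]; auto. exfalso.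
    destruct (form_isotropic _ _ H0 x1 x2 (sym_part_sym_form T A BT BA) HS)
      as [w [Hw1 [Hw2 Hw3]]]; try (apply Hsph; auto); try (rewrite sym_part_diag; lra).
    rewrite sym_part_diag in Hw3.
    assert (Nw : normset T w) by (apply Hsph; split; auto; apply hnorm_of_ip1; auto).
    pose proof (Hall w Nw) as K. rewrite Hw3, Rabs_R0 in K. lra.
  - left. intros x Nx. destruct (Hsplit x Nx) as [|Q]; auto.
    exfalso. apply Hno. exists x. auto.
Qed.

Lemma uniform_margin (T A : H -> H) m e k : bounded_linear T -> bounded_linear A ->
  orthonormal m e -> 0 <= k ->
  (forall x, proj m e x = x -> hnorm x = 1 -> k < ip (T x) (A x)) ->
  exists delta, 0 < delta /\ forall x, proj m e x = x -> (k + delta) * ip x x <= ip (T x) (A x).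
Proof.
  intros BT BA O Hk Hmarg.
  pose proof (sym_form_sub_ip _ _ k (sym_part_sym_form T A BT BA) Hk) as HB.
  destruct (form_coercive m e _ _ O HB) as [delta [Hd Hcoer]].
  - intros x Hx Hx0.
    destruct (normalize _ Hx0) as [Hu [Hxu Hp]]. set (u := (/ hnorm x) *v x) in *.
    assert (Hpu : proj m e u = u) by (unfold u; rewrite proj_scal, Hx; reflexivity).
    rewrite Hxu, (form_scal2 _ _ _ _ HB), sym_part_diag, Hu.
    pose proof (Hmarg u Hpu (hnorm_of_ip1 _ Hu)).
    apply Rmult_lt_0_compat; [apply Rmult_lt_0_compat|]; lra.
  - exists delta. split; auto. intros x Hx. pose proof (Hcoer x Hx) as K.
    rewrite sym_part_diag in K. lra.
Qed.

Lemma gap_quadratic_real (t s0 mu c Mb Na a n : R) :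
  0 <= s0 -> s0 < t -> 0 <= mu -> 4 * mu * c <= t * t - s0 * s0 ->
  0 <= a -> 0 <= n -> a + n * n <= 1 ->
  (t * t - 2 * mu * c) * a + s0 * s0 * (n * n) + 4 * mu * Mb * n + mu * mu * (Na * Na) <=
  t * t - 2 * mu * c + mu * mu * (8 * Mb * Mb / (t * t - s0 * s0) + Na * Na).
Proof.
  intros Hs0 Hst Hmu Hmc Ha Hn Han.
  set (g := t * t - s0 * s0) in *.
  assert (Hg : 0 < g) by (unfold g; nra).
  assert (K1 : (t * t - 2 * mu * c) * a <= (t * t - 2 * mu * c) * (1 - n * n))
    by (apply Rmult_le_compat_l; unfold g in *; nra).
  assert (K2 : 0 <= g / 2 * (n - 4 * mu * Mb / g) * (n - 4 * mu * Mb / g)).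
  { pose proof (Rle_0_sqr (n - 4 * mu * Mb / g)). unfold Rsqr in *.
    rewrite Rmult_assoc. apply Rmult_le_pos; lra. }
  assert (K3 : g / 2 * (n - 4 * mu * Mb / g) * (n - 4 * mu * Mb / g) =
               g / 2 * (n * n) - 4 * mu * Mb * n + mu * mu * (8 * Mb * Mb / g)) by (field; lra).
  assert (K4 : 2 * mu * c * (n * n) <= g / 2 * (n * n))
    by (apply Rmult_le_compat_r; [apply Rle_0_sqr | lra]).
  unfold g in *. nra.
Qed.


Lemma ip_top_eigen_add (T : H -> H) x z (s0 : R) : linear_op T -> top_eigen T x ->
  ip x z = 0 -> hnorm (T z) <= s0 * hnorm z ->
  ip (T (x +v z)) (T (x +v z)) <= opnorm T * opnorm T * ip x x + s0 * s0 * (hnorm z * hnorm z).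
Proof.
  intros LT Hx Hxz HTz.
  rewrite (lin_add _ _ _ LT), ip_add_orth by (rewrite Hx, Hxz; ring).
  rewrite (Hx x). pose proof (ip_le_of_hnorm (T z) _ HTz). nra.
Qed.

Lemma ip_op_add_lower (T A : H -> H) x z (c : R) : bounded_linear T -> bounded_linear A ->
  hnorm x <= 1 -> hnorm (x +v z) <= 1 -> c * ip x x <= ip (T x) (A x) ->
  c * ip x x - 2 * (opnorm T * opnorm A) * hnorm z <= ip (T (x +v z)) (A (x +v z)).
Proof.
  intros BT BA Hx Hy Hc. set (y := x +v z) in *.
  assert (E : ip (T y) (A y) = ip (T x) (A x) + ip (T x) (A z) + ip (T z) (A y)).
  { unfold y at 1. rewrite (lin_add _ _ _ (proj1 BT)), hinner_addl.
    unfold y at 1. rewrite (lin_add _ _ _ (proj1 BA)), ip_addr. ring. }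
  pose proof (ip_op_bound T A x z BT BA) as K1. pose proof (ip_op_bound T A z y BT BA) as K2.
  pose proof (opnorm_ge0 T BT). pose proof (opnorm_ge0 A BA). pose proof (hnorm_ge0 z).
  assert (Htz : 0 <= opnorm T * opnorm A * hnorm z) by (repeat apply Rmult_le_pos; lra).
  assert (opnorm T * opnorm A * hnorm x * hnorm z <= opnorm T * opnorm A * hnorm z).
  { replace (opnorm T * opnorm A * hnorm x * hnorm z) with
      (opnorm T * opnorm A * hnorm z * hnorm x) by ring.
    pose proof (Rmult_le_compat_l _ _ _ Htz Hx). lra. }
  assert (opnorm T * opnorm A * hnorm z * hnorm y <= opnorm T * opnorm A * hnorm z)
    by (pose proof (Rmult_le_compat_l _ _ _ Htz Hy); lra).
  pose proof (Rle_abs (- ip (T x) (A z))). pose proof (Rle_abs (- ip (T z) (A y))).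
  rewrite !Rabs_Ropp in *. lra.
Qed.

(** On the span the perturbation [T - mu A] gains [2 mu c]; off the span [T] loses the gap
    [||T||^2 - s0^2], which absorbs the cross terms once [mu] is small. *)
Lemma perturbation_bound (T A : H -> H) m e (s0 c mu : R) :
  bounded_linear T -> bounded_linear A -> orthonormal m e ->
  (forall x, proj m e x = x -> top_eigen T x) ->
  (forall z, (forall x, proj m e x = x -> ip x z = 0) -> hnorm (T z) <= s0 * hnorm z) ->
  (forall x, proj m e x = x -> c * ip x x <= ip (T x) (A x)) ->
  0 <= s0 -> s0 < opnorm T -> 0 <= mu ->
  4 * mu * c <= opnorm T * opnorm T - s0 * s0 ->
  forall y, hnorm y <= 1 ->
  ip (T y +v (- mu) *v A y) (T y +v (- mu) *v A y) <=
  opnorm T * opnorm T - 2 * mu * c +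
  mu * mu * (8 * (opnorm T * opnorm A) * (opnorm T * opnorm A) /
             (opnorm T * opnorm T - s0 * s0) + opnorm A * opnorm A).
Proof.
  intros BT BA O Heig Hgap Hc Hs0 Hst Hmu Hmc y Hy.
  set (x := proj m e y). set (z := hsub y x).
  assert (Hyxz : y = x +v z) by (symmetry; apply hadd_hsub).
  assert (Px : proj m e x = x) by (apply proj_idem; auto).
  assert (Hz : forall w, proj m e w = w -> ip w z = 0).
  { intros w Hw. rewrite <- Hw. unfold proj at 1. rewrite hinner_sym.
    apply proj_residual_orth_lin_comb; auto. }
  assert (Hyy : ip x x + hnorm z * hnorm z <= 1).
  { rewrite hnorm_sq, <- ip_add_orth, <- Hyxz by auto. apply (ip_le_of_hnorm y 1) in Hy. lra. }
  assert (Hnx : hnorm x <= 1).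
  { apply hnorm_le_of_ip; [lra|]. pose proof (Rle_0_sqr (hnorm z)). unfold Rsqr in *. lra. }
  pose proof (ip_top_eigen_add T x z s0 (proj1 BT) (Heig x Px) (Hz x Px) (Hgap z Hz)) as HTyy.
  rewrite Hyxz in Hy.
  pose proof (ip_op_add_lower T A x z c BT BA Hnx Hy (Hc x Px)) as HTA.
  rewrite <- Hyxz in HTyy, HTA, Hy.
  assert (HAy : ip (A y) (A y) <= opnorm A * opnorm A).
  { apply ip_le_of_hnorm. pose proof (opnorm_bound A y BA).
    pose proof (hnorm_ge0 y). pose proof (opnorm_ge0 A BA). nra. }
  rewrite ip_expand.
  eapply Rle_trans; [|apply (gap_quadratic_real (opnorm T) s0 mu c (opnorm T * opnorm A)
                             (opnorm A) (ip x x) (hnorm z)); auto;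
                      [apply hinner_pos | apply hnorm_ge0]].
  assert (mu * mu * ip (A y) (A y) <= mu * mu * (opnorm A * opnorm A))
    by (apply Rmult_le_compat_l; nra).
  assert (- mu * ip (T y) (A y) <=
          - mu * (c * ip x x - 2 * (opnorm T * opnorm A) * hnorm z))
    by (apply Rmult_le_compat_neg_l; lra).
  nra.
Qed.

Lemma small_step_exists (g c d K : R) : 0 < g -> 0 < c -> 0 < d -> 0 <= K ->
  exists mu, 0 < mu /\ 4 * mu * c <= g /\ mu * K <= d.
Proof.
  intros Hg Hc Hd HK. exists (Rmin (g / (4 * c)) (d / (K + 1))).
  pose proof (Rmin_l (g / (4 * c)) (d / (K + 1))) as K1.
  pose proof (Rmin_r (g / (4 * c)) (d / (K + 1))) as K2.
  set (mu := Rmin (g / (4 * c)) (d / (K + 1))) in *.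
  split; [apply Rmin_glb_lt; apply Rdiv_lt_0_compat; lra | split].
  - apply Rmult_le_compat_l with (r := 4 * c) in K1; [|lra].
    replace (4 * c * (g / (4 * c))) with g in K1 by (field; lra). lra.
  - apply Rmult_le_compat_l with (r := K + 1) in K2; [|lra].
    replace ((K + 1) * (d / (K + 1))) with d in K2 by (field; lra).
    assert (0 <= mu) by (unfold mu; apply Rmin_glb; apply Rmult_le_pos;
      try (left; apply Rinv_0_lt_compat); lra).
    nra.
Qed.

Lemma not_bj_orth_of_gap (T A : H -> H) (eps : R) (H0 : H -> Prop) :
  bounded_linear T -> bounded_linear A -> 0 <= eps ->
  finite_dim_subspace H0 -> (forall x, normset T x <-> unit_sphere H0 x) ->
  opnorm_on (orth_compl H0) T < opnorm T ->
  (forall x, normset T x -> eps * opnorm T * opnorm A < ip (T x) (A x)) ->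
  ~ BJ_orth_eps eps T A.
Proof.
  intros BT BA Heps Hfd Hsph Hgap Hall HBJ. pose proof Hfd as [HS _].
  destruct (gram_schmidt _ Hfd) as [m [e [O [Pe Hsp]]]].
  assert (Hspan : forall x, proj m e x = x -> H0 x).
  { intros x Hx. rewrite <- Hx. unfold proj. apply lin_comb_in; auto. }
  pose proof (opnorm_ge0 T BT) as Ht. pose proof (opnorm_ge0 A BA) as HNA.
  pose proof (opnorm_on_ge0 (orth_compl H0) T (proj1 BT)
    (proj1 (orth_compl_subspace H0)) (bounded_linear_bounded_on _ _ BT)) as Hs0.
  set (t := opnorm T) in *. set (NA := opnorm A) in *.
  set (s0 := opnorm_on (orth_compl H0) T) in *.
  set (k := eps * t * NA).
  assert (Hk : 0 <= k) by (apply Rmult_le_pos; [apply Rmult_le_pos|]; lra).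
  destruct (uniform_margin T A m e k BT BA O Hk) as [d [Hd Hmarg]].
  { intros x Hx Hx1. apply Hall, Hsph. split; auto. }
  set (g := t * t - s0 * s0). assert (Hg : 0 < g) by (unfold g; nra).
  set (K := 8 * (t * NA) * (t * NA) / g + NA * NA).
  assert (HK : 0 <= K).
  { unfold K. assert (0 <= 8 * (t * NA) * (t * NA) / g); [|nra].
    apply Rmult_le_pos; [nra | left; apply Rinv_0_lt_compat; lra]. }
  destruct (small_step_exists g (k + d) d K Hg ltac:(lra) Hd HK) as [mu [Hmu [Hmu1 Hmu2]]].
  assert (HSn : opnorm (fun y => T y +v (- mu) *v A y) * opnorm (fun y => T y +v (- mu) *v A y)
                <= t * t - 2 * mu * (k + d) + mu * mu * K).
  { apply opnorm_sq_le; [apply bounded_linear_add_scal; auto|].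
    apply (perturbation_bound T A m e s0 (k + d) mu BT BA O); auto; try lra.
    - intros x Hx. apply (sphere_subspace_top_eigen T H0 x BT HS Hsph), Hspan; auto.
    - intros z Hz. apply opnorm_on_bound; auto.
      + apply BT.
      + apply orth_compl_subspace.
      + apply bounded_linear_bounded_on; auto.
      + intros w Hw. apply Hz, Hsp; auto. }
  pose proof (HBJ (- mu)) as HB. rewrite (opnorm_scal A (- mu) BA) in HB. fold t NA in HB.
  rewrite Rabs_Ropp, Rabs_right in HB by lra. simpl in HB.
  assert (0 < mu * d) by nra. assert (mu * (mu * K) <= mu * d) by (apply Rmult_le_compat_l; lra).
  unfold k in HSn. nra.
Qed.

Lemma bj_orth_iff_of_gap (T A : H -> H) (eps : R) (H0 : H -> Prop) :
  bounded_linear T -> bounded_linear A -> 0 <= eps ->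
  finite_dim_subspace H0 -> (forall x, normset T x <-> unit_sphere H0 x) ->
  opnorm_on (orth_compl H0) T < opnorm T ->
  (BJ_orth_eps eps T A <->
   exists x, normset T x /\ Rabs (ip (T x) (A x)) <= eps * opnorm T * opnorm A).
Proof.
  intros BT BA Heps Hfd Hsph Hgap. split.
  - intro HBJ. apply NNPP. intro Hn.
    assert (Hall : forall x, normset T x -> eps * opnorm T * opnorm A < Rabs (ip (T x) (A x))).
    { intros x Nx. apply Rnot_le_lt. intro Hle. apply Hn. exists x. auto. }
    pose proof (opnorm_ge0 T BT). pose proof (opnorm_ge0 A BA).
    assert (Hk : 0 <= eps * opnorm T * opnorm A) by (apply Rmult_le_pos; [apply Rmult_le_pos|]; lra).
    destruct (normset_sign_constant T A H0 _ BT BA (proj1 Hfd) Hsph Hk Hall) as [Hpos|Hneg].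
    + exact (not_bj_orth_of_gap T A eps H0 BT BA Heps Hfd Hsph Hgap Hpos HBJ).
    + pose proof (bounded_linear_scal A (-1) BA) as BA'.
      apply (not_bj_orth_of_gap T _ eps H0 BT BA' Heps Hfd Hsph Hgap); [|apply bj_orth_opp; auto].
      intros x Nx. rewrite (opnorm_scal A (-1) BA), ip_scalr, Rabs_left by lra.
      pose proof (Hneg x Nx). lra.
  - intros [x [Nx Hx]]. apply (bj_orth_of_normset T A eps x); auto.
Qed.


(** * Limits and diagonal operators *)

Definition islim (u : nat -> H) (l : H) : Prop :=
  forall r, 0 < r -> exists N, forall n, (N <= n)%nat -> hnorm (hsub (u n) l) < r.

Lemma islim_unique u l1 l2 : islim u l1 -> islim u l2 -> l1 = l2.
Proof.
  intros A B. apply hsub_eq0, hnorm_eq0. apply Rle_antisym; [|apply hnorm_ge0].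
  apply Rle_plus_epsilon. intros r Hr.
  destruct (A (r / 2) ltac:(lra)) as [N1 HN1]. destruct (B (r / 2) ltac:(lra)) as [N2 HN2].
  pose proof (HN1 (N1 + N2)%nat ltac:(lia)). pose proof (HN2 (N1 + N2)%nat ltac:(lia)).
  rewrite (hsub_trans l1 (u (N1 + N2)%nat) l2). eapply Rle_trans; [apply hnorm_triangle|].
  rewrite hnorm_hsub_swap. lra.
Qed.

Lemma islim_add u v (l l' : H) : islim u l -> islim v l' ->
  islim (fun n => u n +v v n) (l +v l').
Proof.
  intros A B r Hr. destruct (A (r / 2) ltac:(lra)) as [N1 HN1].
  destruct (B (r / 2) ltac:(lra)) as [N2 HN2].
  exists (N1 + N2)%nat. intros n Hn. rewrite hsub_add.
  eapply Rle_lt_trans; [apply hnorm_triangle|].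
  pose proof (HN1 n ltac:(lia)). pose proof (HN2 n ltac:(lia)). lra.
Qed.

Lemma islim_scal u l a : islim u l -> islim (fun n => a *v u n) (a *v l).
Proof.
  intros A r Hr. pose proof (Rabs_pos a).
  destruct (A (r / (Rabs a + 1))) as [N HN]; [apply Rdiv_lt_0_compat; lra|].
  exists N. intros n Hn. rewrite hsub_scal, hnorm_scal. pose proof (HN n Hn).
  assert (Rabs a * hnorm (hsub (u n) l) <= Rabs a * (r / (Rabs a + 1)))
    by (apply Rmult_le_compat_l; lra).
  assert (Rabs a * (r / (Rabs a + 1)) < r).
  { apply (Rmult_lt_reg_r (Rabs a + 1)); [lra|].
    replace (Rabs a * (r / (Rabs a + 1)) * (Rabs a + 1)) with (Rabs a * r) by (field; lra). nra. }
  lra.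
Qed.

Lemma islim_eventually_const u l N : (forall n, (N <= n)%nat -> u n = l) -> islim u l.
Proof. intros E r Hr. exists N. intros n Hn. rewrite E, hsub_self, hnorm_0; auto. Qed.

Lemma islim_ip_le u l y L N : islim u l ->
  (forall n, (N <= n)%nat -> ip y (u n) <= L) -> ip y l <= L.
Proof.
  intros A B. apply Rle_plus_epsilon. intros r Hr. pose proof (hnorm_ge0 y).
  destruct (A (r / (hnorm y + 1))) as [N1 HN1]; [apply Rdiv_lt_0_compat; lra|].
  pose proof (HN1 (N + N1)%nat ltac:(lia)) as K. pose proof (B (N + N1)%nat ltac:(lia)) as K2.
  set (w := u (N + N1)%nat) in *.
  pose proof (cauchy_schwarz y (hsub w l)) as CS. rewrite ip_subr in CS.
  pose proof (Rle_abs (- (ip y w - ip y l))) as K3. rewrite Rabs_Ropp in K3.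
  assert (hnorm y * hnorm (hsub w l) <= hnorm y * (r / (hnorm y + 1)))
    by (apply Rmult_le_compat_l; lra).
  assert (hnorm y * (r / (hnorm y + 1)) <= r).
  { apply (Rmult_le_reg_r (hnorm y + 1)); [lra|].
    replace (hnorm y * (r / (hnorm y + 1)) * (hnorm y + 1)) with (hnorm y * r) by (field; lra).
    nra. }
  lra.
Qed.

Lemma islim_dist_le u l y L N : islim u l ->
  (forall n, (N <= n)%nat -> hnorm (hsub y (u n)) <= L) -> hnorm (hsub y l) <= L.
Proof.
  intros A B. apply Rle_plus_epsilon. intros r Hr. destruct (A r Hr) as [N1 HN1].
  pose proof (HN1 (N + N1)%nat ltac:(lia)). pose proof (B (N + N1)%nat ltac:(lia)).
  rewrite (hsub_trans y (u (N + N1)%nat) l). eapply Rle_trans; [apply hnorm_triangle|]. lra.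
Qed.

Lemma cauchy_islim (u : nat -> H) :
  (forall r, 0 < r -> exists N, forall n m, (N <= m)%nat -> (m <= n)%nat ->
     ip (hsub (u n) (u m)) (hsub (u n) (u m)) < r * r) ->
  exists l, islim u l.
Proof.
  intro C. assert (Hsq : forall n m r, 0 < r -> ip (hsub (u n) (u m)) (hsub (u n) (u m)) < r * r ->
    hnorm (hsub (u n) (u m)) < r).
  { intros n m r Hr K. unfold hnorm. rewrite <- (sqrt_square r) by lra.
    apply sqrt_lt_1_alt. split; [apply hinner_pos | lra]. }
  destruct (hcomplete H u) as [l Hl].
  - intros r Hr. destruct (C r Hr) as [N HN]. exists N. intros n m Hn Hm.
    rewrite hopp_scal. fold (hsub (u n) (u m)). fold (hnorm (hsub (u n) (u m))).
    destruct (Compare_dec.le_lt_dec m n) as [Hmn|Hmn].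
    + apply Hsq; auto.
    + rewrite <- hnorm_hsub_swap. apply Hsq; auto. apply HN; lia.
  - exists l. intros r Hr. destruct (Hl r Hr) as [N HN]. exists N. intros n Hn.
    pose proof (HN n Hn) as K. rewrite hopp_scal in K. exact K.
Qed.

Definition diag_partial (es : nat -> H) (b : nat -> R) (N : nat) (x : H) : H :=
  lin_comb N es (fun i => b i * ip x (es i)).

Lemma lin_comb_tail_sq es c N N' : orthonormal N' es -> (N <= N')%nat ->
  ip (hsub (lin_comb N' es c) (lin_comb N es c)) (hsub (lin_comb N' es c) (lin_comb N es c))
  = ssum N' (fun i => c i * c i) - ssum N (fun i => c i * c i).
Proof.
  intros O HN. induction N' as [|N' IH].
  - assert (N = 0)%nat by lia. subst. simpl. rewrite hsub_self, ip_0l. ring.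
  - destruct (Nat.eq_dec N (S N')) as [->|Hne]; [rewrite hsub_self, ip_0l; ring|].
    assert (O' : orthonormal N' es) by (apply (orthonormal_le (S N')); auto; lia).
    specialize (IH O' ltac:(lia)). simpl.
    rewrite hsub_add_scal, ip_expand, IH, ip_subl, !ip_lin_comb_orth
      by (intros; apply (proj2 O); lia).
    rewrite (proj1 O) by lia. ring.
Qed.

Section Diagonal.
Variables (es : nat -> H) (b : nat -> R).
Hypothesis es_orthonormal : forall n, orthonormal n es.
Hypothesis b_range : forall i, 0 <= b i <= 1.

(** Bessel's inequality makes the partial sums Cauchy. *)
Lemma diag_partial_cauchy x : exists l, islim (fun N => diag_partial es b N x) l.
Proof.
  apply cauchy_islim.
  set (c := fun i => ip x (es i)).
  set (sig := fun N => ssum N (fun i => c i * c i)).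
  assert (Hg : Un_growing sig).
  { intro n. unfold sig. simpl. pose proof (Rle_0_sqr (c n)). unfold Rsqr in *. lra. }
  assert (Hub : has_ub sig).
  { exists (ip x x). intros r [n ->]. unfold sig, c. apply bessel; auto. }
  destruct (growing_cv sig Hg Hub) as [L HL].
  pose proof (CV_Cauchy sig (exist _ L HL)) as Cc.
  intros r Hr. destruct (Cc (r * r) ltac:(nra)) as [N HN]. exists N. intros n m Hm Hmn.
  unfold diag_partial. rewrite lin_comb_tail_sq by auto.
  pose proof (HN n m ltac:(lia) ltac:(lia)) as K. unfold Rdist, sig in K.
  eapply Rle_lt_trans; [apply (ssum_diff_le _ (fun i => c i * c i)); auto|].
  { intro i. pose proof (b_range i). fold (c i). assert (0 <= c i * c i) by nra.
    replace (b i * c i * (b i * c i)) with ((b i * b i) * (c i * c i)) by ring.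
    assert (b i * b i <= 1) by nra. nra. }
  pose proof (Rle_abs (ssum n (fun i => c i * c i) - ssum m (fun i => c i * c i))). lra.
Qed.

Definition diag (x : H) : H :=
  epsilon (inhabits 0v) (fun l => islim (fun N => diag_partial es b N x) l).

Lemma diag_spec x : islim (fun N => diag_partial es b N x) (diag x).
Proof. unfold diag. apply epsilon_spec. apply diag_partial_cauchy. Qed.

Lemma diag_add x y : diag (x +v y) = diag x +v diag y.
Proof.
  apply (islim_unique (fun N => diag_partial es b N (x +v y))); [apply diag_spec|].
  replace (fun N => diag_partial es b N (x +v y))
    with (fun N => diag_partial es b N x +v diag_partial es b N y).
  - apply islim_add; apply diag_spec.
  - apply functional_extensionality. intro N. unfold diag_partial. rewrite <- lin_comb_add.
    apply lin_comb_ext. intros. rewrite hinner_addl. ring.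
Qed.

Lemma diag_scal a x : diag (a *v x) = a *v diag x.
Proof.
  apply (islim_unique (fun N => diag_partial es b N (a *v x))); [apply diag_spec|].
  replace (fun N => diag_partial es b N (a *v x)) with (fun N => a *v diag_partial es b N x).
  - apply islim_scal; apply diag_spec.
  - apply functional_extensionality. intro N. unfold diag_partial. rewrite <- lin_comb_scal.
    apply lin_comb_ext. intros. rewrite hinner_scall. ring.
Qed.

Lemma ip_diag_partial x N :
  ip x (diag_partial es b N x) = ssum N (fun i => b i * (ip x (es i) * ip x (es i))).
Proof. unfold diag_partial. rewrite ip_lin_comb_r. apply ssum_ext. intros; ring. Qed.

Lemma hnorm_sub_diag_le x : hnorm (hsub x (diag x)) <= hnorm x.
Proof.
  apply (islim_dist_le _ _ _ _ 0 (diag_spec x)). intros N _.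
  apply hnorm_le_of_ip; [apply hnorm_ge0|]. rewrite hnorm_sq.
  set (c := fun i => ip x (es i)).
  rewrite ip_subl, !ip_subr, ip_diag_partial. unfold diag_partial.
  rewrite ip_lin_comb_lin_comb, ip_lin_comb_l by auto.
  rewrite (ssum_ext N (fun i => b i * ip x (es i) * ip (es i) x) (fun i => b i * (c i * c i)))
    by (intros; unfold c; rewrite hinner_sym; ring).
  fold c.
  assert (ssum N (fun i => b i * c i * (b i * c i)) <= ssum N (fun i => b i * (c i * c i))).
  { apply ssum_le. intros i _. pose proof (b_range i). assert (0 <= c i * c i) by nra.
    replace (b i * c i * (b i * c i)) with (b i * (b i * (c i * c i))) by ring.
    apply Rmult_le_compat_l; nra. }
  assert (0 <= ssum N (fun i => b i * (c i * c i))).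
  { apply ssum_ge0. intros i _. pose proof (b_range i). assert (0 <= c i * c i) by nra. nra. }
  unfold c in *; cbv beta in *; lra.
Qed.

Lemma diag_basis n : diag (es n) = b n *v es n.
Proof.
  apply (islim_unique (fun N => diag_partial es b N (es n))); [apply diag_spec|].
  apply (islim_eventually_const _ _ (S n)). intros N HN. unfold diag_partial.
  induction N as [|N IH]; [lia|]. simpl.
  destruct (Nat.eq_dec n N) as [->|Hne].
  - rewrite lin_comb_zero.
    + rewrite (proj1 (es_orthonormal (S N))), Rmult_1_r by lia. apply hadd_0.
    + intros i Hi. rewrite (proj2 (es_orthonormal (S N))) by lia. ring.
  - rewrite IH by lia.
    rewrite (proj2 (es_orthonormal (S N))), Rmult_0_r, hscal_0l by lia. apply hadd_0r.
Qed.

End Diagonal.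


(** * The characterization (1) forces condition (2) *)

Definition bj_orth_attained (eps : R) (T : H -> H) : Prop :=
  forall A : H -> H, bounded_linear A ->
    (BJ_orth_eps eps T A <->
     exists x, normset T x /\ Rabs (ip (T x) (A x)) <= eps * opnorm T * opnorm A).

Lemma infinite_dim_residual (P : H -> Prop) : is_subspace P -> ~ finite_dim_subspace P ->
  forall n e, orthonormal n e -> (forall i, (i < n)%nat -> P (e i)) ->
  exists u, P u /\ ip u u = 1 /\ forall i, (i < n)%nat -> ip (e i) u = 0.
Proof.
  intros HP Hnf n e O Pe.
  destruct (classic (forall x, P x -> proj n e x = x)) as [Hall|Hex].
  - exfalso. apply Hnf. split; auto. exists n, e. split; auto.
    intros x Px. exists (fun i => ip x (e i)). symmetry. apply Hall; auto.
  - apply not_all_ex_not in Hex as [y Hy]. apply imply_to_and in Hy as [Py Hy].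
    destruct (orthonormal_residual P n e y HP O Pe Py Hy) as [u [Pu [Hu [Hou _]]]].
    exists u. auto.
Qed.

Fixpoint chain (F : (nat -> H) -> nat -> H) (n : nat) : nat -> H :=
  match n with
  | O => fun _ => 0v
  | S k => extend (chain F k) k (F (chain F k) k)
  end.

Lemma chain_stable F n i : (i < n)%nat -> chain F n i = F (chain F i) i.
Proof.
  induction n as [|n IH]; intros Hi; [lia|]. simpl.
  destruct (Nat.eq_dec i n) as [->|Hne]; [apply extend_eq|].
  rewrite extend_lt by lia. apply IH. lia.
Qed.

Lemma orthonormal_sequence (P : H -> Prop) : is_subspace P -> ~ finite_dim_subspace P ->
  exists es, (forall n, orthonormal n es) /\ forall n, P (es n).
Proof.
  intros HP Hnf.
  set (Next := fun (e : nat -> H) (n : nat) (u : H) =>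
    P u /\ ip u u = 1 /\ forall i, (i < n)%nat -> ip (e i) u = 0).
  set (F := fun e n => epsilon (inhabits 0v) (Next e n)).
  set (es := fun n => F (chain F n) n).
  assert (Hchain : forall n i, (i < n)%nat -> chain F n i = es i) by (intros; apply chain_stable; auto).
  assert (Main : forall n, orthonormal n es /\ forall i, (i < n)%nat -> P (es i)).
  { induction n as [|n [IHo IHp]]; [split; [split|]; intros; lia|].
    assert (Oc : orthonormal n (chain F n)).
    { apply (orthonormal_ext n es); auto. intros; symmetry; auto. }
    assert (Pc : forall i, (i < n)%nat -> P (chain F n i)) by (intros; rewrite Hchain; auto).
    assert (Hnext : Next (chain F n) n (es n)).
    { unfold es, F. apply epsilon_spec. apply infinite_dim_residual; auto. }
    destruct Hnext as [Pn [Hn Hon]].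
    split.
    - apply (orthonormal_ext (S n) (extend (chain F n) n (es n))).
      + intros i Hi. unfold extend. destruct (Nat.eqb_spec i n); subst; auto. apply Hchain; lia.
      + apply orthonormal_extend; auto.
    - intros i Hi. destruct (Nat.eq_dec i n) as [->|]; auto. apply IHp; lia. }
  exists es. split; [intro n; apply Main|]. intro n. apply (proj2 (Main (S n))). lia.
Qed.

(** The weights increase to [1 - eps] without reaching it: along [es] the operator
    [T (I - D)] is asymptotically [eps]-orthogonal to [T], yet no point of [M_T] witnesses it. *)
Definition defect_weight (eps : R) (i : nat) : R := (1 - eps) * (INR i / INR (S i)).

Lemma defect_weight_spec eps i : 0 <= eps < 1 ->
  0 <= defect_weight eps i <= 1 /\ 1 - defect_weight eps i = eps + (1 - eps) / INR (S i).
Proof.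
  intros He. unfold defect_weight. rewrite S_INR. pose proof (pos_INR i).
  assert (0 <= INR i / (INR i + 1) <= 1).
  { split; [apply Rmult_le_pos; [lra | left; apply Rinv_0_lt_compat; lra]|].
    apply (Rmult_le_reg_r (INR i + 1)); [lra|]. unfold Rdiv. rewrite Rmult_assoc, Rinv_l by lra. lra. }
  split; [split; nra | field; lra].
Qed.

Lemma bj_orth_limit_real (t X l eps : R) : 0 <= t -> 0 <= l ->
  (forall n, t * t - 2 * l * t * t * (eps + (1 - eps) / INR (S n)) <= X * X) ->
  t * t - 2 * eps * t * (l * t) <= X * X.
Proof.
  intros Ht Hl Hn. apply Rle_plus_epsilon. intros r Hr.
  set (Kc := 2 * l * t * t * Rabs (1 - eps)).
  assert (HKc : 0 <= Kc) by (unfold Kc; pose proof (Rabs_pos (1 - eps));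
    apply Rmult_le_pos; [|lra]; nra).
  destruct (archimed_cor1 (r / (Kc + 1))) as [N [HN HN0]]; [apply Rdiv_lt_0_compat; lra|].
  destruct N as [|n]; [lia|]. pose proof (Hn n) as Hnn.
  assert (0 < INR (S n)) by (apply lt_0_INR; lia).
  assert (HK2 : Kc / INR (S n) <= r).
  { assert (Kc / INR (S n) <= (Kc + 1) / INR (S n))
      by (apply Rmult_le_compat_r; [left; apply Rinv_0_lt_compat; auto | lra]).
    assert (Hlt : (Kc + 1) * / INR (S n) < (Kc + 1) * (r / (Kc + 1)))
      by (apply Rmult_lt_compat_l; lra).
    replace ((Kc + 1) * (r / (Kc + 1))) with r in Hlt by (field; lra). unfold Rdiv. lra. }
  assert (2 * l * t * t * (1 - eps) / INR (S n) <= Kc / INR (S n)).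
  { apply Rmult_le_compat_r; [left; apply Rinv_0_lt_compat; auto|].
    unfold Kc. apply Rmult_le_compat_l; [nra | apply Rle_abs]. }
  replace (t * t - 2 * l * t * t * (eps + (1 - eps) / INR (S n))) with
    (t * t - 2 * eps * t * (l * t) - 2 * l * t * t * (1 - eps) / INR (S n)) in Hnn
    by (field; lra).
  lra.
Qed.


Section Defect.
Variables (T : H -> H) (eps : R) (es : nat -> H).
Hypothesis T_bounded : bounded_linear T.
Hypothesis eps_range : 0 <= eps < 1.
Hypothesis es_orthonormal : forall n, orthonormal n es.
Hypothesis es_top : forall n, top_eigen T (es n).

Definition defect (x : H) : H := T (hsub x (diag es (defect_weight eps) x)).

Lemma defect_weight_range i : 0 <= defect_weight eps i <= 1.
Proof. apply defect_weight_spec; auto. Qed.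

Lemma hnorm_defect_le x : hnorm (defect x) <= opnorm T * hnorm x.
Proof.
  unfold defect. eapply Rle_trans; [apply opnorm_bound; auto|].
  apply Rmult_le_compat_l; [apply opnorm_ge0; auto|].
  apply hnorm_sub_diag_le; auto. apply defect_weight_range.
Qed.

Lemma defect_bounded : bounded_linear defect.
Proof.
  pose proof T_bounded as [LT _]. pose proof defect_weight_range as Hb.
  split; [split|exists (opnorm T); apply hnorm_defect_le].
  - intros x y. unfold defect. rewrite diag_add, hsub_add by auto. apply lin_add; auto.
  - intros a x. unfold defect. rewrite diag_scal, hsub_scal by auto. apply lin_scal; auto.
Qed.

Lemma normset_es n : normset T (es n).
Proof.
  apply normset_iff_top_eigen; auto. split; auto.
  apply hnorm_of_ip1. apply (proj1 (es_orthonormal (S n))). lia.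
Qed.

Lemma defect_es n : defect (es n) = (1 - defect_weight eps n) *v T (es n).
Proof.
  unfold defect. rewrite diag_basis by (auto; apply defect_weight_range).
  rewrite <- (lin_scal _ _ _ (proj1 T_bounded)). f_equal.
  unfold hsub. rewrite hscal_assoc. rewrite <- (hscal_1 H (es n)) at 1.
  rewrite <- hscal_addl. f_equal. ring.
Qed.

Lemma opnorm_defect : opnorm defect = opnorm T.
Proof.
  apply Rle_antisym.
  - apply opnorm_le; [apply defect_bounded|]. intros x Hx. pose proof (hnorm_defect_le x).
    pose proof (opnorm_ge0 T T_bounded). nra.
  - pose proof (opnorm_ge defect (es 0%nat) defect_bounded (Req_le _ _ (proj1 (normset_es 0)))) as G.
    rewrite defect_es in G. unfold defect_weight in G. simpl in G.
    replace (1 - (1 - eps) * (0 / 1)) with 1 in G by (field; lra).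
    rewrite hscal_1, (proj2 (normset_es 0)) in G. exact G.
Qed.

Lemma defect_bj_orth : BJ_orth_eps eps T defect.
Proof.
  intro lam. rewrite (opnorm_scal defect lam defect_bounded), opnorm_defect. simpl.
  rewrite !Rmult_1_r. apply Rle_ge.
  set (Sl := fun x => T x +v lam *v defect x).
  pose proof (bounded_linear_add_scal T defect lam T_bounded defect_bounded) as BS.
  apply (bj_orth_limit_real _ _ _ eps (opnorm_ge0 T T_bounded) (Rabs_pos lam)). intro n.
  destruct (defect_weight_spec eps n eps_range) as [_ Hbe].
  set (be := eps + (1 - eps) / INR (S n)) in *.
  assert (Hbe0 : 0 <= be).
  { unfold be. assert (0 <= (1 - eps) / INR (S n)); [|lra].
    apply Rmult_le_pos; [lra | left; apply Rinv_0_lt_compat, lt_0_INR; lia]. }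
  pose proof (opnorm_ge Sl (es n) BS (Req_le _ _ (proj1 (normset_es n)))) as G.
  unfold Sl in G. rewrite defect_es, Hbe, hscal_assoc, <- (hscal_1 H (T (es n))) in G at 1.
  rewrite <- hscal_addl, hnorm_scal, (proj2 (normset_es n)) in G. fold be in G.
  pose proof (opnorm_ge0 T T_bounded). pose proof (Rabs_pos (1 + lam * be)).
  assert (G2 : Rabs (1 + lam * be) * opnorm T * (Rabs (1 + lam * be) * opnorm T) <=
               opnorm Sl * opnorm Sl) by (apply Rmult_le_compat; auto; apply Rmult_le_pos; auto).
  assert (Habs : Rabs (1 + lam * be) * Rabs (1 + lam * be) = (1 + lam * be) * (1 + lam * be)).
  { rewrite <- Rabs_mult. apply Rabs_pos_eq. apply Rle_0_sqr. }
  assert (1 - 2 * Rabs lam * be <= (1 + lam * be) * (1 + lam * be)).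
  { destruct (Rle_or_lt 0 lam); [rewrite Rabs_right by lra | rewrite Rabs_left by lra]; nra. }
  assert ((1 - 2 * Rabs lam * be) * (opnorm T * opnorm T) <=
          (1 + lam * be) * (1 + lam * be) * (opnorm T * opnorm T))
    by (apply Rmult_le_compat_r; nra).
  nra.
Qed.

Lemma ip_diag_lt x : ip x x = 1 -> ip x (diag es (defect_weight eps) x) < 1 - eps.
Proof.
  intro Hx1. pose proof defect_weight_range as Hb.
  set (c := fun i => ip x (es i)).
  destruct (classic (exists m, c m <> 0)) as [[m Hm]|Hno].
  - assert (Hc2 : 0 < c m * c m) by nra.
    assert (Hcm : 0 < c m * c m / INR (S m)) by (apply Rdiv_lt_0_compat; [lra | apply lt_0_INR; lia]).
    enough (ip x (diag es (defect_weight eps) x) <= (1 - eps) * (1 - c m * c m / INR (S m)))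
      by (assert (0 < (1 - eps) * (c m * c m / INR (S m))) by (apply Rmult_lt_0_compat; lra); nra).
    apply (islim_ip_le _ _ _ _ (S m) (diag_spec es _ es_orthonormal Hb x)). intros N HN.
    rewrite ip_diag_partial.
    rewrite (ssum_ext N _ (fun i => (1 - eps) * (c i * c i) - (1 - eps) * (c i * c i / INR (S i)))).
    2:{ intros i _. destruct (defect_weight_spec eps i eps_range) as [_ E].
        replace (defect_weight eps i) with (1 - (eps + (1 - eps) / INR (S i))) by lra.
        unfold c. field. apply not_0_INR. lia. }
    rewrite ssum_minus, !ssum_scal.
    assert (Hbes : ssum N (fun i => c i * c i) <= 1) by (rewrite <- Hx1; apply bessel; auto).
    assert (ssum N (fun i => c i * c i / INR (S i)) >= c m * c m / INR (S m)).
    { apply Rle_ge, (ssum_term_le N (fun i => c i * c i / INR (S i))); [lia|].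
      intros i _. apply Rmult_le_pos; [nra | left; apply Rinv_0_lt_compat, lt_0_INR; lia]. }
    nra.
  - assert (ip x (diag es (defect_weight eps) x) <= 0); [|lra].
    apply (islim_ip_le _ _ _ _ 0 (diag_spec es _ es_orthonormal Hb x)). intros N _.
    rewrite ip_diag_partial, (ssum_ext N _ (fun _ => 0 * 0)).
    + clear. induction N; simpl; lra.
    + intros i _. replace (ip x (es i)) with 0; [ring|].
      apply NNPP. intro Hi. apply Hno. exists i. auto.
Qed.

Lemma ip_defect_gt x : 0 < opnorm T -> normset T x ->
  eps * opnorm T * opnorm T < ip (T x) (defect x).
Proof.
  intros Ht Nx. destruct (normset_ip T x Nx) as [Hx1 _].
  unfold defect. rewrite (normset_top_eigen T x T_bounded Nx), ip_subr, Hx1.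
  pose proof (ip_diag_lt x Hx1).
  assert (0 < opnorm T * opnorm T * (1 - ip x (diag es (defect_weight eps) x) - eps))
    by (apply Rmult_lt_0_compat; nra).
  lra.
Qed.

End Defect.


Lemma top_eigen_finite_dim (T : H -> H) (eps : R) : bounded_linear T -> 0 < opnorm T ->
  0 <= eps < 1 -> bj_orth_attained eps T -> finite_dim_subspace (top_eigen T).
Proof.
  intros BT Ht He Hyp. apply NNPP. intro Hnf.
  destruct (orthonormal_sequence _ (top_eigen_subspace T BT) Hnf) as [es [O Hes]].
  pose proof (defect_bounded T eps es BT He O) as BA.
  destruct (proj1 (Hyp _ BA) (defect_bj_orth T eps es BT He O Hes)) as [x [Nx Hx]].
  rewrite opnorm_defect in Hx by auto.
  pose proof (ip_defect_gt T eps es BT He O x Ht Nx) as K.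
  pose proof (Rle_abs (ip (T x) (defect T eps es x))). lra.
Qed.

(** Without a gap, [T] composed with the projection onto [top_eigen T] is orthogonal to [T] in
    the Birkhoff-James sense, but [<T x, T x> = ||T||^2] on [M_T]. *)
Lemma top_eigen_gap (T : H -> H) (eps : R) : bounded_linear T -> 0 < opnorm T ->
  0 <= eps < 1 -> bj_orth_attained eps T -> finite_dim_subspace (top_eigen T) ->
  opnorm_on (orth_compl (top_eigen T)) T < opnorm T.
Proof.
  intros BT Ht He Hyp Hfd. pose proof BT as [LT _].
  destruct (Rlt_or_le (opnorm_on (orth_compl (top_eigen T)) T) (opnorm T)) as [|Hs]; auto.
  exfalso. destruct (gram_schmidt _ Hfd) as [m [e [O [Pe Hsp]]]].
  set (A := fun x => T (proj m e x)).
  assert (BA : bounded_linear A).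
  { split; [split|]; intros; unfold A.
    - rewrite proj_add. apply lin_add; auto.
    - rewrite proj_scal. apply lin_scal; auto.
    - exists (opnorm T). intro x. eapply Rle_trans; [apply opnorm_bound; auto|].
      apply Rmult_le_compat_l; [lra | apply hnorm_proj_le; auto]. }
  assert (HNA : opnorm A <= opnorm T).
  { apply opnorm_le; auto. intros x Hx. apply (opnorm_ge T (proj m e x) BT).
    eapply Rle_trans; [apply hnorm_proj_le|]; auto. }
  assert (HBJ : BJ_orth_eps eps T A).
  { intro lam. rewrite (opnorm_scal A lam BA).
    pose proof (bounded_linear_add_scal T A lam BT BA) as BS.
    assert (HX : opnorm T <= opnorm (fun x => T x +v lam *v A x)).
    { eapply Rle_trans; [exact Hs|]. apply opnorm_on_le.
      - apply (proj1 (orth_compl_subspace _)).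
      - apply bounded_linear_bounded_on; auto.
      - intros z Hz Hz1. pose proof (opnorm_ge _ z BS Hz1) as G. simpl in G.
        assert (Pz : proj m e z = 0v) by (apply proj_of_orth; intros i Hi; apply Hz, Pe; auto).
        unfold A in G. rewrite Pz, (lin_0 _ LT), hscal_0r, hadd_0r in G. exact G. }
    pose proof (Rabs_pos lam). pose proof (opnorm_ge0 A BA).
    assert (0 <= eps * opnorm T * (Rabs lam * opnorm A))
      by (repeat apply Rmult_le_pos; lra).
    simpl. rewrite !Rmult_1_r. nra. }
  destruct (proj1 (Hyp A BA) HBJ) as [x [Nx Hx]].
  assert (Ax : A x = T x) by (unfold A; rewrite Hsp; auto; apply normset_top_eigen; auto).
  rewrite Ax, (proj2 (normset_ip _ _ Nx)), Rabs_right in Hx by nra.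
  assert (eps * opnorm T * opnorm A <= eps * opnorm T * opnorm T)
    by (apply Rmult_le_compat_l; nra).
  assert (0 < (1 - eps) * (opnorm T * opnorm T)) by (apply Rmult_lt_0_compat; nra).
  lra.
Qed.

End HilbertOperators.

Theorem mainTheorem3 (H : HilbertSpace) (T : H -> H) (eps : R)
  (hT : bounded_linear T) (hT0 : exists x, T x <> hzero H)
  (heps0 : 0 <= eps) (heps1 : eps < 1) :
  ((forall A : H -> H, bounded_linear A ->
      (BJ_orth_eps eps T A <->
       exists x, normset T x /\
         Rabs (hinner H (T x) (A x)) <= eps * opnorm T * opnorm A))
   <->
   (exists H0 : H -> Prop,
      finite_dim_subspace H0 /\
      (forall x, normset T x <-> unit_sphere H0 x) /\
      opnorm_on (orth_compl H0) T < opnorm T))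
  /\
  ((exists H0 : H -> Prop,
      finite_dim_subspace H0 /\
      (forall x, normset T x <-> unit_sphere H0 x) /\
      opnorm_on (orth_compl H0) T < opnorm T) ->
   forall A : H -> H, bounded_linear A ->
     (forall x, normset T x -> normset A x) ->
     (BJ_orth_eps eps T A <->
      exists x, normset T x /\ ip_orth_eps eps (T x) (A x))).
Proof.
  pose proof (opnorm_gt0 H T hT hT0) as Ht.
  split; [split|].
  - intro Hyp. exists (top_eigen H T).
    pose proof (top_eigen_finite_dim H T eps hT Ht (conj heps0 heps1) Hyp) as Hfd.
    split; [|split]; auto.
    + apply normset_iff_top_eigen; auto.
    + apply (top_eigen_gap H T eps); auto.
  - intros [H0 [Hfd [Hsph Hgap]]] A BA. apply (bj_orth_iff_of_gap H T A eps H0); auto.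
  - intros [H0 [Hfd [Hsph Hgap]]] A BA HMA.
    rewrite (bj_orth_iff_of_gap H T A eps H0 hT BA heps0 Hfd Hsph Hgap).
    unfold ip_orth_eps.
    split; intros [x [Nx Hx]]; exists x; split; auto;
      rewrite (proj2 Nx), (proj2 (HMA x Nx)) in *; auto.
Qed.
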